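(* Let $q>0$, $a:[0,\infty)\to[0,\infty)$ continuous and $r:[0,\infty)\to[0,q]$ with $q=\sup_{t\ge0}r(t)$, and assume: (A1) the zero solution of $x'(t)=-a(t)x(t-r(t))$ is uniformly asymptotically stable; (A2) $a_0:=\sup_{t\ge0}|a(t)|<\infty$; (A3) $r$ is uniformly continuous on $[0,\infty)$. Let $K>0,\sigma>0$ be constants such that $|U(t;s,\phi)|\le K\|\phi\|_q e^{-\sigma(t-s)}$ for all $t\ge s\ge0$ and $\phi\in C([-q,0],\mathbb R)$. Set $t_0:=3q+w_r(q)$ and, for $h=q/k$ ($k\ge1$ an integer), $K_1(h):=a_0^2\,[2h+w_r(h)]\,K$; then $K_1(h)\to0$ as $h\to0$. Moreover, there is a constant $M_1>0$, independent of $h$ and $\varphi$, such that for every $h=q/k$ with $K_1(h)<\sigma$ there exists $\eta=\eta(h)>0$ such that for every $\varphi\in C([-q,0],\mathbb R)$ $$|x(\varphi)(t)-z_h(\varphi)(t)|\le\Big[K\,\|E_{h,t_0}\|_q+K_1(h)\,M_1\,\|\varphi\|_q\,t\Big]e^{-\eta(t-t_0)}\qquad\text{for all } t\ge t_0 .$$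
   Context: $C([-q,0],\mathbb R)$ carries the sup norm $\|\phi\|_q=\sup_{-q\le\theta\le0}|\phi(\theta)|$. $U(t;s,\phi)$ denotes the value at time $t$ of the unique solution of $x'(t)=-a(t)x(t-r(t))$ with initial segment $x_s=\phi$ at time $s$ (where $x_s(\theta)=x(s+\theta)$, $-q\le\theta\le0$). $x(\varphi)$ is the solution of $x'(t)=-a(t)x(t-r(t))$, $t\ge0$, with $x(t)=\varphi(t)$ on $[-q,0]$. For $h=q/k$ and $k_i:=\lfloor r(ih)/h\rfloor$, $z_h(\varphi)$ is the solution of $z_h'(t)=-a(t)z_h((i-k_i)h)$ on $[ih,(i+1)h)$, $i\ge0$, continuous on $[0,\infty)$, with $z_h(nh)=\varphi(nh)$ for $n=-k,\dots,0$. $E_h:=x(\varphi)-z_h(\varphi)$ on $[0,\infty)$, and $\|E_{h,t_0}\|_q=\sup_{t_0-q\le s\le t_0}|E_h(s)|$. The global modulus of continuity is $w_r(\ell)=\sup\{|r(t_2)-r(t_1)|:\ t_1,t_2\ge0,\ |t_2-t_1|\le\ell\}$. *)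

From Stdlib Require Export Reals Lra ClassicalEpsilon.
Open Scope R_scope.

(* least upper bound of a set of reals (well specified whenever the set is
   nonempty and bounded above; chosen by Hilbert's epsilon). *)
Definition lub_of (E : R -> Prop) : R := epsilon (inhabits 0) (is_lub E).

Definition sup_on (f : R -> R) (lo hi : R) : R :=
  lub_of (fun y => exists s, lo <= s <= hi /\ y = Rabs (f s)).

Definition normq (q : R) (phi : R -> R) : R := sup_on phi (- q) 0.

Definition cont_on_q (q : R) (phi : R -> R) : Prop :=
  forall th, - q <= th <= 0 -> continue_in phi (fun u => - q <= u <= 0) th.

Definition is_sol (a r : R -> R) (q s : R) (phi x : R -> R) : Prop :=
  (forall th, - q <= th <= 0 -> x (s + th) = phi th) /\
  continue_in x (fun u => s <= u) s /\
  (forall t, s < t -> derivable_pt_lim x t (- (a t * x (t - r t)))).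

Definition UAS (a r : R -> R) (q : R) : Prop :=
  (forall eps, 0 < eps -> exists delta, 0 < delta /\
     forall s phi x, 0 <= s -> cont_on_q q phi -> normq q phi < delta ->
       is_sol a r q s phi x -> forall t, s <= t -> Rabs (x t) < eps) /\
  (exists delta0, 0 < delta0 /\ forall eps, 0 < eps -> exists T, 0 < T /\
     forall s phi x, 0 <= s -> cont_on_q q phi -> normq q phi < delta0 ->
       is_sol a r q s phi x -> forall t, s + T <= t -> Rabs (x t) < eps).

Definition w_mod (r : R -> R) (l : R) : R :=
  lub_of (fun y => exists t1 t2, 0 <= t1 /\ 0 <= t2 /\ Rabs (t2 - t1) <= l /\
                                 y = Rabs (r t2 - r t1)).

Definition a0_of (a : R -> R) : R :=
  lub_of (fun y => exists t, 0 <= t /\ y = Rabs (a t)).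

Definition K1 (a r : R -> R) (K h : R) : R :=
  (a0_of a) ^ 2 * (2 * h + w_mod r h) * K.

Definition is_scheme (a r : R -> R) (q : R) (k : nat) (phi z : R -> R) : Prop :=
  let h := q / INR k in
  (forall n : nat, (n <= k)%nat -> z (- INR n * h) = phi (- INR n * h)) /\
  (forall t, 0 <= t -> continue_in z (fun u => 0 <= u) t) /\
  (forall (i : nat) t, INR i * h < t < INR (S i) * h ->
     derivable_pt_lim z t
       (- (a t * z ((INR i - IZR (Int_part (r (INR i * h) / h))) * h)))).

(* The error [E = x - z] solves the delay equation forced by [a(t) (z(g_i) - z(t - r t))],
   where [g_i = (i - k_i) h] is within [2h + w_r(h)] of [t - r(t)]; so the forcing is at most
   [a0^2 (2h + w_r(h))] times the size of [z] in a window of length [O(q)] before [t].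
   March in steps of a small length [dl] from [t0]: at a step point [s], split [E = y + w]
   with [y] the solution of the homogeneous equation with history [E_s], which decays like
   [K |E_s| e^(-sigma (t - s))], and [w] vanishing on [[s - q, s]] and of size
   [O(dl K1(h))] on [[s, s + dl]]; at [s + dl] the history of [w] is again turned into a
   decaying homogeneous solution.  Each step loses a factor [1 + O(dl K1(h))] against the
   decay [e^(-sigma dl)], which leaves a rate [eta > 0] when [K1(h) < sigma].  The part of
   the forcing driven by [x] itself and by [z] before [t0] (bounded by a discrete Gronwall
   estimate) produces the term growing linearly in [t].  The homogeneous solutions with
   arbitrary continuous history needed for the restarts are built by Picard iteration. *)

From Stdlib Require Import Reals Lra Lia ZArith.
From Coquelicot Require Import Coquelicot.
Open Scope R_scope.

Lemma Rabs_le_nonneg x M : Rabs x <= M -> 0 <= M.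
Proof. pose proof (Rabs_pos x). lra. Qed.

Lemma lub_of_spec (E : R -> Prop) :
  (exists x, E x) -> (exists M, forall y, E y -> y <= M) -> is_lub E (lub_of E).
Proof.
  intros Hne [M HM]. unfold lub_of. apply epsilon_spec.
  destruct (completeness E) as [m Hm]; [exists M; exact HM | exact Hne |].
  exists m; exact Hm.
Qed.

Lemma lub_of_ub (E : R -> Prop) M y : E y -> (forall y, E y -> y <= M) -> y <= lub_of E.
Proof. intros Hy HM. apply (lub_of_spec E); eauto. Qed.

Lemma lub_of_least (E : R -> Prop) M :
  (exists x, E x) -> (forall y, E y -> y <= M) -> lub_of E <= M.
Proof. intros Hne HM. apply (lub_of_spec E); eauto. Qed.

Lemma Rabs_le_a0_of (a : R -> R) : (exists M, forall t, 0 <= t -> Rabs (a t) <= M) ->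
  forall t, 0 <= t -> Rabs (a t) <= a0_of a.
Proof.
  intros [M HM] t Ht. apply lub_of_ub with M; [exists t; auto |].
  intros y [u [Hu ->]]. auto.
Qed.

Lemma sup_on_le f lo hi M : lo <= hi ->
  (forall u, lo <= u <= hi -> Rabs (f u) <= M) -> sup_on f lo hi <= M.
Proof.
  intros Hle HM. apply lub_of_least.
  - exists (Rabs (f lo)), lo; split; [lra | reflexivity].
  - intros y [u [Hu ->]]. auto.
Qed.

Lemma continue_in_subset f (D D' : R -> Prop) u : (forall v, D' v -> D v) ->
  continue_in f D u -> continue_in f D' u.
Proof.
  intros HD H eps He. destruct (H eps He) as [d [Hd H']]. exists d; split; auto.
  intros v [[Hv1 Hv2] Hv3]. apply H'. repeat split; auto.
Qed.

Lemma continuity_pt_continue_in f D u : continuity_pt f u -> continue_in f D u.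
Proof.
  intros H eps He. destruct (H eps He) as [d [Hd H']]. exists d; split; auto.
  intros v [[_ Hv2] Hv3]. apply H'. repeat split; auto.
Qed.

Lemma derivable_pt_lim_continuity_pt f u d : derivable_pt_lim f u d -> continuity_pt f u.
Proof. intro H. apply derivable_continuous_pt. exists d; exact H. Qed.

Lemma continue_in_interior_continuity_pt f lo u : lo < u ->
  continue_in f (fun v => lo <= v) u -> continuity_pt f u.
Proof.
  intros Hlo H eps He. destruct (H eps He) as [d [Hd H']].
  exists (Rmin d (u - lo)); split; [apply Rmin_pos; lra |].
  intros v [[_ Hvu] Hv]. simpl in *. unfold R_dist in *.
  pose proof (Rmin_l d (u - lo)). pose proof (Rmin_r d (u - lo)).
  apply Rabs_def2 in Hv as [Hv1 Hv2].
  apply H'. repeat split; auto; try lra. apply Rabs_def1; lra.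
Qed.

Lemma continuity_pt_of_uniform_continuity f u : 0 < u ->
  (forall eps, 0 < eps -> exists delta, 0 < delta /\
     forall t1 t2, 0 <= t1 -> 0 <= t2 -> Rabs (t2 - t1) < delta -> Rabs (f t2 - f t1) < eps) ->
  continuity_pt f u.
Proof.
  intros Hu H eps He. destruct (H eps He) as [d [Hd H1]].
  exists (Rmin d u). split; [apply Rmin_pos; lra |].
  intros v [_ Hv]. simpl in *. unfold R_dist in *.
  pose proof (Rmin_l d u). pose proof (Rmin_r d u).
  apply Rabs_def2 in Hv as [Hv1 Hv2]. apply H1; try lra. apply Rabs_def1; lra.
Qed.

Lemma continue_in_extend_by_zero f lo s hi : lo <= s <= hi ->
  (forall v, lo <= v <= s -> f v = 0) ->
  (forall u, s <= u <= hi -> continue_in f (fun v => s <= v <= hi) u) ->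
  forall u, lo <= u <= hi -> continue_in f (fun v => lo <= v <= hi) u.
Proof.
  intros Hs Hz Hc u Hu eps He.
  destruct (Rlt_dec u s) as [Hlt | Hge].
  { exists (s - u). split; [lra |]. intros v [[Hv1 _] Hv2]. simpl in *. unfold R_dist in *.
    apply Rabs_def2 in Hv2. rewrite (Hz v), (Hz u) by lra. rewrite Rminus_diag, Rabs_R0. lra. }
  destruct (Hc u ltac:(lra) eps He) as [d [Hd H1]].
  destruct (Req_dec u s) as [Eu | Eu].
  - exists d. split; auto. intros v [[Hv1 Hv3] Hv2].
    destruct (Rle_dec v s) as [Hvs | Hvs].
    + simpl. unfold R_dist. rewrite (Hz v), (Hz u) by lra. rewrite Rminus_diag, Rabs_R0. lra.
    + apply H1. repeat split; auto; lra.
  - exists (Rmin d (u - s)). split; [apply Rmin_pos; lra |].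
    intros v [[Hv1 Hv3] Hv2]. simpl in Hv2. unfold R_dist in Hv2.
    pose proof (Rmin_l d (u - s)). pose proof (Rmin_r d (u - s)).
    apply Rabs_def2 in Hv2 as [A1 A2]. apply H1. repeat split; auto; try lra.
    simpl. unfold R_dist. apply Rabs_def1; lra.
Qed.

Lemma continue_in_shift f lo hi c u : continue_in f (fun v => lo <= v <= hi) (c + u) ->
  continue_in (fun th => f (c + th)) (fun th => lo - c <= th <= hi - c) u.
Proof.
  intros H eps He. destruct (H eps He) as [d [Hd H1]]. exists d; split; auto.
  intros v [[Hv1 Hv3] Hv2]. apply H1. simpl in *. unfold R_dist in *.
  split; [split; [lra | intro E; apply Hv3; lra] |].
  replace (c + v - (c + u)) with (v - u) by ring. auto.
Qed.

Definition clamp (lo hi v : R) := Rmax lo (Rmin hi v).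

Lemma clamp_in lo hi v : lo <= hi -> lo <= clamp lo hi v <= hi.
Proof. intros. unfold clamp, Rmax, Rmin. repeat destruct Rle_dec; lra. Qed.

Lemma clamp_id lo hi v : lo <= v <= hi -> clamp lo hi v = v.
Proof. intros. unfold clamp, Rmax, Rmin. repeat destruct Rle_dec; lra. Qed.

Lemma clamp_lipschitz lo hi u v : lo <= hi ->
  Rabs (clamp lo hi u - clamp lo hi v) <= Rabs (u - v).
Proof.
  intros. unfold clamp, Rmax, Rmin. repeat destruct Rle_dec;
  unfold Rabs; repeat destruct Rcase_abs; lra.
Qed.

Lemma continuity_pt_clamp_comp f lo hi : lo <= hi ->
  (forall u, lo <= u <= hi -> continue_in f (fun v => lo <= v <= hi) u) ->
  forall v, continuity_pt (fun v => f (clamp lo hi v)) v.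
Proof.
  intros Hle Hc v eps Heps.
  destruct (Hc (clamp lo hi v) (clamp_in lo hi v Hle) eps Heps) as [d [Hd H]].
  exists d; split; auto. intros x [_ Hx].
  destruct (Req_dec (clamp lo hi v) (clamp lo hi x)) as [E | E].
  { simpl. rewrite E. unfold R_dist. rewrite Rminus_diag, Rabs_R0. lra. }
  apply H. repeat split; [apply clamp_in; auto | apply clamp_in; auto | exact E |].
  simpl in *. unfold R_dist in *.
  eapply Rle_lt_trans; [apply clamp_lipschitz; auto | exact Hx].
Qed.

Lemma continue_in_attains_max_abs f lo hi : lo <= hi ->
  (forall u, lo <= u <= hi -> continue_in f (fun v => lo <= v <= hi) u) ->
  exists u0, lo <= u0 <= hi /\ forall u, lo <= u <= hi -> Rabs (f u) <= Rabs (f u0).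
Proof.
  intros Hle Hc.
  destruct (continuity_ab_maj (fun v => Rabs (f (clamp lo hi v))) lo hi Hle)
    as [m [Hm Hm2]].
  { intros c _. apply (continuity_pt_comp (fun v => f (clamp lo hi v)) Rabs).
    - apply continuity_pt_clamp_comp; auto.
    - apply Rcontinuity_abs. }
  exists m; split; auto. intros u Hu. specialize (Hm u Hu).
  rewrite (clamp_id lo hi u Hu), (clamp_id lo hi m Hm2) in Hm. exact Hm.
Qed.

Lemma Rabs_le_sup_on f lo hi u :
  (forall v, lo <= v <= hi -> continue_in f (fun w => lo <= w <= hi) v) ->
  lo <= u <= hi -> Rabs (f u) <= sup_on f lo hi.
Proof.
  intros Hc Hu. destruct (continue_in_attains_max_abs f lo hi ltac:(lra) Hc) as [u0 [_ HM]].
  apply lub_of_ub with (Rabs (f u0)); [exists u; auto |].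
  intros y [v [Hv ->]]. auto.
Qed.

Lemma exp_le x y : x <= y -> exp x <= exp y.
Proof. intros [H | H]; [left; apply exp_increasing; auto | subst; lra]. Qed.

Lemma exp_le_inv x : 0 <= x < 1 -> exp x <= / (1 - x).
Proof.
  intros Hx. pose proof (exp_ineq1_le (- x)). pose proof (exp_pos x).
  assert (exp x * exp (- x) = 1) by (rewrite <- exp_plus, Rplus_opp_r; apply exp_0).
  apply Rmult_le_reg_r with (1 - x); [lra |]. rewrite Rinv_l by lra. nra.
Qed.

(** * Lipschitz bounds from derivative bounds *)

Lemma Rabs_sub_le_of_derive_bound_closed f a b L : a < b ->
  (forall u, a <= u <= b -> exists d, derivable_pt_lim f u d /\ Rabs d <= L) ->
  Rabs (f b - f a) <= L * (b - a).
Proof.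
  intros Hab Hd.
  assert (pr1 : forall c, a < c < b -> derivable_pt f c).
  { intros c Hc. destruct (constructive_indefinite_description _ (Hd c ltac:(lra)))
      as [d [Hd1 _]]. exists d; exact Hd1. }
  assert (pr2 : forall c, a < c < b -> derivable_pt id c) by (intros; apply derivable_pt_id).
  destruct (MVT f id a b pr1 pr2 Hab) as [c [P HP]].
  { intros c Hc. destruct (Hd c Hc) as [d [H1 _]].
    eapply derivable_pt_lim_continuity_pt; eauto. }
  { intros c Hc. apply derivable_continuous_pt, derivable_pt_id. }
  rewrite (derive_pt_eq_0 id c 1 (pr2 c P) (derivable_pt_lim_id c)) in HP. unfold id in HP.
  destruct (Hd c ltac:(lra)) as [d [H1 H2]].
  rewrite (derive_pt_eq_0 f c d (pr1 c P) H1) in HP.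
  replace (f b - f a) with (d * (b - a)) by lra.
  rewrite Rabs_mult, (Rabs_right (b - a)) by lra. apply Rmult_le_compat_r; lra.
Qed.

(* Only one-sided continuity at the endpoints: shrink to [[a+d0, b-d0]] and let [d0 -> 0]. *)
Lemma Rabs_sub_le_of_derive_bound f a b L : a <= b ->
  continue_in f (fun v => a <= v <= b) a -> continue_in f (fun v => a <= v <= b) b ->
  (forall u, a < u < b -> exists d, derivable_pt_lim f u d /\ Rabs d <= L) ->
  Rabs (f b - f a) <= L * (b - a).
Proof.
  intros Hab Ca Cb Hd. destruct (Req_dec a b) as [E | Hne].
  { subst. rewrite Rminus_diag, Rabs_R0. lra. }
  assert (HL : 0 <= L).
  { destruct (Hd ((a + b) / 2) ltac:(lra)) as [d [_ H]]. exact (Rabs_le_nonneg _ _ H). }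
  apply Rle_plus_epsilon. intros eps Heps.
  destruct (Ca (eps / 2) ltac:(lra)) as [d1 [Hd1 C1]].
  destruct (Cb (eps / 2) ltac:(lra)) as [d2 [Hd2 C2]].
  set (d0 := Rmin d1 (Rmin d2 (b - a)) / 3).
  assert (Hd0 : 0 < d0 /\ d0 < d1 /\ d0 < d2 /\ 3 * d0 <= b - a).
  { unfold d0. pose proof (Rmin_l d1 (Rmin d2 (b - a))).
    pose proof (Rmin_r d1 (Rmin d2 (b - a))). pose proof (Rmin_l d2 (b - a)).
    pose proof (Rmin_r d2 (b - a)).
    assert (0 < Rmin d1 (Rmin d2 (b - a))) by (repeat apply Rmin_pos; lra). lra. }
  assert (M : Rabs (f (b - d0) - f (a + d0)) <= L * ((b - d0) - (a + d0))).
  { apply Rabs_sub_le_of_derive_bound_closed; [lra |]. intros u Hu. apply Hd. lra. }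
  assert (E1 : Rabs (f (a + d0) - f a) < eps / 2).
  { apply C1. repeat split; try lra. simpl. unfold R_dist.
    replace (a + d0 - a) with d0 by ring. rewrite Rabs_right; lra. }
  assert (E2 : Rabs (f (b - d0) - f b) < eps / 2).
  { apply C2. repeat split; try lra. simpl. unfold R_dist.
    replace (b - d0 - b) with (- d0) by ring. rewrite Rabs_Ropp, Rabs_right; lra. }
  replace (f b - f a) with
    ((f (b - d0) - f (a + d0)) + (f (a + d0) - f a) - (f (b - d0) - f b)) by ring.
  unfold Rminus at 1. eapply Rle_trans; [apply Rabs_triang |].
  eapply Rle_trans; [apply Rplus_le_compat_r, Rabs_triang |].
  rewrite Rabs_Ropp.
  assert (L * (b - d0 - (a + d0)) <= L * (b - a)) by (apply Rmult_le_compat_l; lra). lra.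
Qed.

Lemma Int_part_nonneg y : 0 <= y -> (0 <= Int_part y)%Z.
Proof.
  intro Hy. destruct (base_Int_part y) as [_ H2].
  assert (Hgt : IZR (-1) < IZR (Int_part y)) by (simpl; lra).
  apply lt_IZR in Hgt. lia.
Qed.

Lemma grid_cell h t : 0 < h -> 0 <= t -> exists i : nat, INR i * h <= t < INR (S i) * h.
Proof.
  intros Hh Ht. destruct (base_Int_part (t / h)) as [H1 H2].
  assert (Hz := Int_part_nonneg (t / h) ltac:(apply Rdiv_le_0_compat; lra)).
  exists (Z.to_nat (Int_part (t / h))).
  rewrite S_INR, INR_IZR_INZ, Z2Nat.id by exact Hz.
  assert (E : t = t / h * h) by (field; lra).
  split.
  - rewrite E at 2. apply Rmult_le_compat_r; lra.
  - rewrite E at 1. apply Rmult_lt_compat_r; lra.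
Qed.

Lemma no_grid_point_inside_cell m j h : 0 < h ->
  INR m * h < INR j * h -> INR j * h < INR (S m) * h -> False.
Proof.
  intros Hh H1 H2. apply Rmult_lt_reg_r in H1, H2; auto.
  apply INR_lt in H1. apply INR_lt in H2. lia.
Qed.

Lemma Rabs_sub_le_of_derive_bound_off_grid f h A B L : 0 < h -> 0 <= A <= B ->
  (forall u, A <= u <= B -> continue_in f (fun v => A <= v <= B) u) ->
  (forall u, A < u < B -> (forall j : nat, u <> INR j * h) ->
     exists d, derivable_pt_lim f u d /\ Rabs d <= L) ->
  Rabs (f B - f A) <= L * (B - A).
Proof.
  intros Hh HAB Hc Hd.
  assert (Piece : forall (m : nat) x y, A <= x <= y -> y <= B ->
            INR m * h <= x -> y <= INR (S m) * h -> Rabs (f y - f x) <= L * (y - x)).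
  { intros m x y Hxy HyB Hm1 Hm2. apply Rabs_sub_le_of_derive_bound; [lra | | |].
    1,2: apply (continue_in_subset f (fun v => A <= v <= B)); [intros; lra | apply Hc; lra].
    intros u Hu. apply Hd; [lra |]. intros j ->.
    apply (no_grid_point_inside_cell m j h); lra. }
  destruct (grid_cell h A Hh ltac:(lra)) as [i [Hi1 Hi2]].
  assert (Reach : forall n y, A <= y <= B -> y <= INR (S i + n) * h ->
            Rabs (f y - f A) <= L * (y - A)).
  { induction n as [| n IH]; intros y Hy Hyn.
    - rewrite Nat.add_0_r in Hyn. apply (Piece i); lra.
    - set (g := INR (S i + n) * h).
      destruct (Rle_dec y g) as [Hyg | Hyg%Rnot_le_lt]; [apply IH; auto |].
      assert (Hg : INR (S i) * h <= g).
      { apply Rmult_le_compat_r; [lra | apply le_INR; lia]. }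
      assert (IHg : Rabs (f g - f A) <= L * (g - A)) by (apply IH; [split | unfold g]; lra).
      assert (Hgy : Rabs (f y - f g) <= L * (y - g)).
      { apply (Piece (S i + n)%nat); unfold g in *; try lra.
        rewrite Nat.add_succ_r in Hyn. exact Hyn. }
      replace (f y - f A) with ((f y - f g) + (f g - f A)) by ring.
      eapply Rle_trans; [apply Rabs_triang | lra]. }
  destruct (INR_archimed h B Hh) as [n Hn].
  apply (Reach n); [lra |]. rewrite plus_INR.
  assert (0 <= INR (S i)) by apply pos_INR. nra.
Qed.

(** * Solutions of the linear delay equation by Picard iteration *)

Lemma Un_cv_Rabs_sub_le (U : nat -> R) l c B n : Un_cv U l ->
  (forall m, (m >= n)%nat -> Rabs (U m - c) <= B) -> Rabs (l - c) <= B.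
Proof.
  intros Hcv HB. apply Rle_plus_epsilon. intros eps He. destruct (Hcv eps He) as [N HN].
  specialize (HN (max N n) ltac:(lia)). specialize (HB (max N n) ltac:(lia)).
  unfold R_dist in HN. replace (l - c) with ((U (max N n) - c) - (U (max N n) - l)) by ring.
  eapply Rle_trans; [apply Rabs_triang |]. rewrite Rabs_Ropp. lra.
Qed.

Lemma half_pow_eventually_lt C eps : 0 <= C -> 0 < eps ->
  exists N, forall n, (n >= N)%nat -> C * (1 / 2) ^ n < eps.
Proof.
  intros HC He.
  destruct (pow_lt_1_zero (1 / 2) ltac:(rewrite Rabs_right; lra) (eps / (C + 1)))
    as [N HN]; [apply Rdiv_lt_0_compat; lra |].
  exists N. intros n Hn. specialize (HN n Hn).
  rewrite Rabs_right in HN by (left; apply pow_lt; lra).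
  apply Rmult_lt_compat_r with (r := C + 1) in HN; [| lra].
  replace (eps / (C + 1) * (C + 1)) with eps in HN by (field; lra).
  pose proof (pow_lt (1 / 2) n ltac:(lra)). nra.
Qed.

Lemma continuity_pt_of_continuous f v : continuous f v -> continuity_pt f v.
Proof. apply continuity_pt_filterlim. Qed.

Lemma continuous_of_continuity_pt f v : continuity_pt f v -> continuous f v.
Proof. apply continuity_pt_filterlim. Qed.

Lemma is_RInt_exp_affine c l s m : l <> 0 ->
  is_RInt (fun u => c * exp (l * (u - s))) s m (c / l * exp (l * (m - s)) - c / l).
Proof.
  intro Hl.
  replace (c / l) with (c / l * exp (l * (s - s))) at 2
    by (rewrite Rminus_diag, Rmult_0_r, exp_0; ring).
  apply (is_RInt_derive (fun u => c / l * exp (l * (u - s)))).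
  - intros x Hx. auto_derive; auto. replace (x + - s) with (x - s) by ring. field. auto.
  - intros x Hx. apply (@ex_derive_continuous R_AbsRing R_NormedModule). auto_derive; auto.
Qed.

Section Linear_DDE_existence.

Variables (a r : R -> R) (q a0 s : R).
Hypotheses (Hq : 0 < q) (Ha0 : 0 <= a0) (Hs : 0 < s)
  (Ha_cont : forall u, 0 < u -> continuity_pt a u)
  (Hr_cont : forall u, 0 < u -> continuity_pt r u)
  (Hr : forall u, 0 <= u -> 0 <= r u <= q)
  (Ha_bound : forall u, 0 <= u -> Rabs (a u) <= a0).

Definition delayed_term (g : R -> R) (u : R) := a u * g (u - r u).

Lemma delayed_term_continuity_pt g u : 0 < u ->
  (forall v, continuity_pt g v) -> continuity_pt (delayed_term g) u.
Proof.
  intros Hu Hg. apply (continuity_pt_mult a (fun u => g (u - r u))); [auto |].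
  apply (continuity_pt_comp (fun u => u - r u) g); [| auto].
  apply (continuity_pt_minus (fun u => u) r); [| auto].
  apply derivable_continuous_pt, derivable_pt_id.
Qed.

Lemma ex_RInt_delayed_term g b c : 0 < b -> 0 < c ->
  (forall v, continuity_pt g v) -> ex_RInt (delayed_term g) b c.
Proof.
  intros Hb Hc Hg. apply (@ex_RInt_continuous R_CompleteNormedModule).
  intros z Hz. apply continuous_of_continuity_pt.
  assert (0 < Rmin b c) by (apply Rmin_pos; lra).
  apply delayed_term_continuity_pt; auto. lra.
Qed.

Lemma is_derive_RInt_delayed_term g m : (forall v, continuity_pt g v) -> 0 < m ->
  is_derive (fun b => RInt (delayed_term g) s b) m (delayed_term g m).
Proof.
  intros Hg Hm.
  apply (is_derive_RInt (delayed_term g) (fun b => RInt (delayed_term g) s b) s m).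
  - apply (locally_interval _ m (Finite 0) p_infty); simpl; auto.
    intros y Hy _. apply (@RInt_correct R_CompleteNormedModule).
    apply ex_RInt_delayed_term; auto.
  - apply continuous_of_continuity_pt, delayed_term_continuity_pt; auto.
Qed.

Definition volterra (g : R -> R) (v : R) := - RInt (delayed_term g) s (Rmax s v).

Lemma volterra_continuity_pt g : (forall v, continuity_pt g v) ->
  forall v, continuity_pt (volterra g) v.
Proof.
  intros Hg v. apply (continuity_pt_comp (Rmax s) (fun m => - RInt (delayed_term g) s m)).
  - intros eps He. exists eps; split; auto. intros x [_ Hx]. simpl in *. unfold R_dist in *.
    eapply Rle_lt_trans; [| exact Hx]. unfold Rmax.
    repeat destruct Rle_dec; unfold Rabs; repeat destruct Rcase_abs; lra.
  - apply continuity_pt_opp, continuity_pt_of_continuous.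
    apply (@ex_derive_continuous R_AbsRing R_NormedModule). eexists.
    apply is_derive_RInt_delayed_term; auto. unfold Rmax; destruct Rle_dec; lra.
Qed.

Lemma volterra_minus g1 g2 : (forall v, continuity_pt g1 v) -> (forall v, continuity_pt g2 v) ->
  forall v, volterra g1 v - volterra g2 v = volterra (fun w => g1 w - g2 w) v.
Proof.
  intros H1 H2 v. unfold volterra. set (m := Rmax s v).
  assert (Hm : s <= m) by apply Rmax_l.
  assert (E : RInt (fun u => delayed_term g1 u - delayed_term g2 u) s m
              = RInt (delayed_term g1) s m - RInt (delayed_term g2) s m).
  { apply (@RInt_minus R_CompleteNormedModule); apply ex_RInt_delayed_term; auto; lra. }
  assert (E' : RInt (delayed_term (fun w => g1 w - g2 w)) s m
               = RInt (fun u => delayed_term g1 u - delayed_term g2 u) s m).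
  { apply RInt_ext. intros x _. apply Rmult_minus_distr_l. }
  rewrite E', E. ring.
Qed.

Let lam := 2 * a0 + 1.

(* A Bielecki-type weight: it makes [volterra] a contraction of ratio 1/2. *)
Definition bielecki_weight (v : R) := exp (lam * Rmax 0 (v - s)).

Lemma bielecki_weight_ge_1 v : 1 <= bielecki_weight v.
Proof.
  unfold bielecki_weight. rewrite <- exp_0. apply exp_le.
  assert (0 <= Rmax 0 (v - s)) by apply Rmax_l. unfold lam. nra.
Qed.

Lemma volterra_contraction g G : (forall v, continuity_pt g v) ->
  (forall v, Rabs (g v) <= G * bielecki_weight v) ->
  forall v, Rabs (volterra g v) <= G / 2 * bielecki_weight v.
Proof.
  intros Hg HG v. unfold volterra. rewrite Rabs_Ropp.
  assert (HG0 : 0 <= G).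
  { pose proof (HG s) as H. unfold bielecki_weight in H.
    rewrite Rminus_diag, Rmax_left, Rmult_0_r, exp_0, Rmult_1_r in H by lra.
    exact (Rabs_le_nonneg _ _ H). }
  set (m := Rmax s v). assert (Hm : s <= m) by apply Rmax_l.
  assert (Hwm : bielecki_weight v = exp (lam * (m - s))).
  { unfold bielecki_weight, m, Rmax. repeat destruct Rle_dec; try lra; do 2 f_equal; lra. }
  rewrite Hwm.
  set (dF := fun u => a0 * G * exp (lam * (u - s))).
  assert (IF := is_RInt_exp_affine (a0 * G) lam s m ltac:(unfold lam; lra)). fold dF in IF.
  eapply Rle_trans; [apply abs_RInt_le; auto; apply ex_RInt_delayed_term; auto; lra |].
  eapply Rle_trans; [apply (RInt_le _ dF s m Hm) |].
  - apply (@ex_RInt_continuous R_CompleteNormedModule). intros z Hz.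
    apply continuous_of_continuity_pt.
    apply (continuity_pt_comp (delayed_term g) Rabs); [| apply Rcontinuity_abs].
    apply delayed_term_continuity_pt; auto.
    unfold Rmin in Hz; destruct Rle_dec in Hz; lra.
  - eexists. exact IF.
  - intros u Hu. unfold delayed_term, dF. rewrite Rabs_mult, Rmult_assoc.
    apply Rmult_le_compat; try apply Rabs_pos; [apply Ha_bound; lra |].
    eapply Rle_trans; [apply HG | apply Rmult_le_compat_l; auto].
    unfold bielecki_weight. apply exp_le, Rmult_le_compat_l; [unfold lam; lra |].
    pose proof (Hr u ltac:(lra)). unfold Rmax; destruct Rle_dec; lra.
  - rewrite (is_RInt_unique _ _ _ _ IF). pose proof (exp_pos (lam * (m - s))).
    assert (a0 * G / lam <= G / 2).
    { unfold lam. apply Rmult_le_reg_r with (2 * (2 * a0 + 1)); [lra |].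
      field_simplify; lra. }
    assert (0 <= a0 * G / lam) by (unfold lam; apply Rdiv_le_0_compat; nra).
    nra.
Qed.

Variable psi : R -> R.
Hypothesis Hpsi : cont_on_q q psi.

Definition initial_extension (v : R) := psi (clamp (- q) 0 (v - s)).

Lemma initial_extension_continuity_pt v : continuity_pt initial_extension v.
Proof.
  apply (continuity_pt_comp (fun v => v - s) (fun w => psi (clamp (- q) 0 w))).
  - apply (continuity_pt_minus (fun v => v) (fun _ => s)).
    + apply derivable_continuous_pt, derivable_pt_id.
    + apply continuity_pt_const. intros ? ?; auto.
  - apply continuity_pt_clamp_comp; [lra | exact Hpsi].
Qed.

Fixpoint picard (n : nat) : R -> R :=
  match n with
  | O => initial_extension
  | S n => fun v => initial_extension v + volterra (picard n) v
  end.

Lemma picard_continuity_pt n v : continuity_pt (picard n) v.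
Proof.
  revert v; induction n as [| n IH]; intro v; [apply initial_extension_continuity_pt |].
  apply (continuity_pt_plus initial_extension (volterra (picard n))).
  - apply initial_extension_continuity_pt.
  - apply volterra_continuity_pt; auto.
Qed.

Variable M : R.
Hypothesis HM : forall v, Rabs (initial_extension v) <= M.

Lemma M_nonneg : 0 <= M.
Proof. exact (Rabs_le_nonneg _ _ (HM 0)). Qed.

Lemma picard_succ_sub_bound n v :
  Rabs (picard (S n) v - picard n v) <= M * (1 / 2) ^ (S n) * bielecki_weight v.
Proof.
  revert v; induction n as [| n IH]; intro v.
  - simpl. replace (initial_extension v + volterra initial_extension v - initial_extension v)
      with (volterra initial_extension v) by ring.
    replace (M * (1 / 2 * 1)) with (M / 2) by field.
    apply volterra_contraction; [apply initial_extension_continuity_pt |].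
    intro w. pose proof (HM w). pose proof (bielecki_weight_ge_1 w). pose proof M_nonneg. nra.
  - change (picard (S (S n)) v - picard (S n) v) with
      ((initial_extension v + volterra (picard (S n)) v)
       - (initial_extension v + volterra (picard n) v)).
    replace (M * (1 / 2) ^ S (S n)) with (M * (1 / 2) ^ S n / 2) by (simpl; field).
    replace ((initial_extension v + volterra (picard (S n)) v)
             - (initial_extension v + volterra (picard n) v))
      with (volterra (picard (S n)) v - volterra (picard n) v) by ring.
    rewrite volterra_minus by apply picard_continuity_pt.
    apply volterra_contraction; auto.
    intro w. apply (continuity_pt_minus (picard (S n)) (picard n)); apply picard_continuity_pt.
Qed.

Lemma picard_cauchy_bound n m v : (n <= m)%nat ->
  Rabs (picard m v - picard n v) <= M * (1 / 2) ^ n * bielecki_weight v.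
Proof.
  intro Hnm.
  pose proof M_nonneg as HM0.
  assert (Tel : forall p, Rabs (picard (n + p) v - picard n v)
                    <= M * ((1 / 2) ^ n - (1 / 2) ^ (n + p)) * bielecki_weight v).
  { induction p as [| p IH]; [rewrite Nat.add_0_r, !Rminus_diag, Rabs_R0; lra |].
    rewrite <- plus_n_Sm. pose proof (picard_succ_sub_bound (n + p) v) as Hs1.
    replace (picard (S (n + p)) v - picard n v) with
      ((picard (S (n + p)) v - picard (n + p) v) + (picard (n + p) v - picard n v)) by ring.
    eapply Rle_trans; [apply Rabs_triang |].
    replace ((1 / 2) ^ S (n + p)) with ((1 / 2) ^ (n + p) / 2) in * by (simpl; field).
    replace (M * ((1 / 2) ^ n - (1 / 2) ^ (n + p) / 2) * bielecki_weight v) with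
      (M * (1 / 2) ^ (n + p) / 2 * bielecki_weight v
       + M * ((1 / 2) ^ n - (1 / 2) ^ (n + p)) * bielecki_weight v) by field.
    lra. }
  replace m with (n + (m - n))%nat by lia. eapply Rle_trans; [apply Tel |].
  pose proof (pow_lt (1 / 2) (n + (m - n)) ltac:(lra)). pose proof (bielecki_weight_ge_1 v).
  assert (0 <= M * (1 / 2) ^ (n + (m - n)) * bielecki_weight v)
    by (repeat apply Rmult_le_pos; lra).
  rewrite Rmult_minus_distr_l, Rmult_minus_distr_r. lra.
Qed.

Lemma picard_Cauchy v : Cauchy_crit (fun n => picard n v).
Proof.
  intros eps He. pose proof (bielecki_weight_ge_1 v).
  pose proof M_nonneg as HM0.
  destruct (half_pow_eventually_lt (M * bielecki_weight v) eps) as [N HN]; [nra | auto |].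
  exists N. intros n m Hn Hm. unfold R_dist.
  destruct (Nat.le_ge_cases n m) as [Hle | Hle].
  - rewrite Rabs_minus_sym. eapply Rle_lt_trans; [apply picard_cauchy_bound; auto |].
    specialize (HN n Hn). lra.
  - eapply Rle_lt_trans; [apply picard_cauchy_bound; auto |]. specialize (HN m Hm). lra.
Qed.

Definition picard_limit (v : R) : R := proj1_sig (Rcomplete.R_complete _ (picard_Cauchy v)).

Lemma picard_limit_bound n v :
  Rabs (picard_limit v - picard n v) <= M * (1 / 2) ^ n * bielecki_weight v.
Proof.
  unfold picard_limit. destruct (Rcomplete.R_complete _ (picard_Cauchy v)) as [l Hl]. simpl.
  apply (Un_cv_Rabs_sub_le (fun n => picard n v) l _ _ n Hl).
  intros m Hm. apply picard_cauchy_bound. lia.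
Qed.

Lemma bielecki_weight_near v w : Rabs (w - v) < 1 ->
  bielecki_weight w <= bielecki_weight v * exp lam.
Proof.
  intro H. unfold bielecki_weight. rewrite <- exp_plus. apply exp_le.
  apply Rabs_def2 in H.
  assert (Rmax 0 (w - s) <= Rmax 0 (v - s) + 1) by (unfold Rmax; repeat destruct Rle_dec; lra).
  unfold lam. nra.
Qed.

Lemma picard_limit_continuity_pt v : continuity_pt picard_limit v.
Proof.
  intros eps He.
  pose proof M_nonneg as HM0.
  pose proof (bielecki_weight_ge_1 v). pose proof (exp_pos lam).
  assert (Hlam : 1 <= exp lam) by (rewrite <- exp_0; apply exp_le; unfold lam; lra).
  set (C := M * bielecki_weight v * exp lam).
  destruct (half_pow_eventually_lt C (eps / 3)) as [N HN];
    [unfold C; apply Rmult_le_pos; nra | lra |].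
  specialize (HN N (le_n N)).
  destruct (picard_continuity_pt N v (eps / 3) ltac:(lra)) as [d [Hd HdN]].
  exists (Rmin d 1). split; [apply Rmin_pos; lra |].
  intros w [_ Hw]. simpl in *. unfold R_dist in *.
  pose proof (Rmin_l d 1). pose proof (Rmin_r d 1).
  destruct (Req_dec w v) as [-> | Hne]; [rewrite Rminus_diag, Rabs_R0; lra |].
  assert (HSN : Rabs (picard N w - picard N v) < eps / 3) by (apply HdN; repeat split; auto; lra).
  pose proof (picard_limit_bound N w). pose proof (picard_limit_bound N v).
  pose proof (bielecki_weight_near v w ltac:(lra)).
  pose proof (pow_lt (1 / 2) N ltac:(lra)).
  assert (M * (1 / 2) ^ N * bielecki_weight w <= C * (1 / 2) ^ N).
  { unfold C. replace (M * bielecki_weight v * exp lam * (1 / 2) ^ N)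
      with (M * (1 / 2) ^ N * (bielecki_weight v * exp lam)) by ring.
    apply Rmult_le_compat_l; [apply Rmult_le_pos |]; lra. }
  assert (M * (1 / 2) ^ N * bielecki_weight v <= C * (1 / 2) ^ N).
  { unfold C. replace (M * bielecki_weight v * exp lam * (1 / 2) ^ N)
      with (M * (1 / 2) ^ N * bielecki_weight v * exp lam) by ring.
    pose proof (Rmult_le_pos (M * (1 / 2) ^ N) (bielecki_weight v)). nra. }
  replace (picard_limit w - picard_limit v) with
    ((picard_limit w - picard N w) + (picard N w - picard N v) - (picard_limit v - picard N v))
    by ring.
  unfold Rminus at 1. eapply Rle_lt_trans; [apply Rabs_triang |].
  eapply Rle_lt_trans; [apply Rplus_le_compat_r, Rabs_triang |]. rewrite Rabs_Ropp. lra.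
Qed.

Lemma picard_limit_fixed_point v :
  picard_limit v = initial_extension v + volterra picard_limit v.
Proof.
  apply Rminus_diag_uniq, Rabs_eq_0, Rle_antisym; [| apply Rabs_pos].
  apply Rle_plus_epsilon. intros eps He. rewrite Rplus_0_l.
  pose proof M_nonneg as HM0.
  pose proof (bielecki_weight_ge_1 v).
  destruct (half_pow_eventually_lt (M * bielecki_weight v) eps) as [N HN]; [nra | auto |].
  specialize (HN N (le_n N)).
  replace (picard_limit v - (initial_extension v + volterra picard_limit v)) with
    ((picard_limit v - picard (S N) v) + (volterra (picard N) v - volterra picard_limit v))
    by (simpl; ring).
  rewrite volterra_minus by (apply picard_continuity_pt || apply picard_limit_continuity_pt).
  assert (Rabs (volterra (fun w => picard N w - picard_limit w) v)
            <= M * (1 / 2) ^ N / 2 * bielecki_weight v).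
  { apply volterra_contraction.
    - intro w. apply (continuity_pt_minus (picard N) picard_limit);
        [apply picard_continuity_pt | apply picard_limit_continuity_pt].
    - intro w. rewrite Rabs_minus_sym. apply picard_limit_bound. }
  assert (Rabs (picard_limit v - picard (S N) v) <= M * (1 / 2) ^ N / 2 * bielecki_weight v).
  { eapply Rle_trans; [apply picard_limit_bound | simpl; right; field]. }
  eapply Rle_trans; [apply Rabs_triang |].
  replace (M * (1 / 2) ^ N / 2 * bielecki_weight v) with
    (M * bielecki_weight v * (1 / 2) ^ N / 2) in * by field.
  lra.
Qed.

Lemma picard_limit_is_sol : is_sol a r q s psi picard_limit.
Proof.
  split; [| split].
  - intros th Hth. rewrite picard_limit_fixed_point. unfold initial_extension, volterra.
    replace (s + th - s) with th by ring. rewrite clamp_id, Rmax_left by lra.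
    rewrite (RInt_point s (delayed_term picard_limit)). simpl. unfold zero; simpl. ring.
  - apply continuity_pt_continue_in, picard_limit_continuity_pt.
  - intros t Ht. apply is_derive_Reals.
    apply (is_derive_ext_loc (fun v => psi 0 + - RInt (delayed_term picard_limit) s v)).
    + apply (locally_interval _ t (Finite s) p_infty); simpl; auto.
      intros y Hy _. rewrite (picard_limit_fixed_point y).
      unfold initial_extension, volterra. rewrite Rmax_right by lra.
      do 2 f_equal. unfold clamp, Rmin, Rmax. repeat destruct Rle_dec; lra.
    + replace (- (a t * picard_limit (t - r t))) with
        (plus 0 (- delayed_term picard_limit t)) by (unfold plus, delayed_term; simpl; ring).
      apply (is_derive_plus (fun _ => psi 0) (fun v => - RInt (delayed_term picard_limit) s v)).
      * exact (@is_derive_const R_AbsRing R_NormedModule (psi 0) t).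
      * apply (is_derive_opp (fun v => RInt (delayed_term picard_limit) s v)).
        apply is_derive_RInt_delayed_term; [apply picard_limit_continuity_pt | lra].
Qed.

End Linear_DDE_existence.

Theorem linear_dde_solution_exists a r q a0 s psi :
  0 < q -> 0 <= a0 -> 0 < s ->
  (forall u, 0 < u -> continuity_pt a u) -> (forall u, 0 < u -> continuity_pt r u) ->
  (forall u, 0 <= u -> 0 <= r u <= q) -> (forall u, 0 <= u -> Rabs (a u) <= a0) ->
  cont_on_q q psi -> exists x, is_sol a r q s psi x.
Proof.
  intros Hq Ha0 Hs Hac Hrc Hr Hab Hpsi.
  destruct (continue_in_attains_max_abs psi (- q) 0 ltac:(lra) Hpsi) as [u0 [_ Hu0]].
  assert (HM : forall v, Rabs (initial_extension q s psi v) <= Rabs (psi u0))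
    by (intro v; apply Hu0, clamp_in; lra).
  eexists. exact (picard_limit_is_sol a r q a0 s Hq Ha0 Hs Hac Hrc Hr Hab psi Hpsi _ HM).
Qed.

(** * The numerical scheme *)

Definition grid_delay (r : R -> R) (h : R) (i : nat) : R :=
  (INR i - IZR (Int_part (r (INR i * h) / h))) * h.

Lemma INR_ge_1 (k : nat) : (1 <= k)%nat -> 1 <= INR k.
Proof. intro H. apply le_INR in H. exact H. Qed.

Lemma exp_pow_INR x n : exp x ^ n = exp (INR n * x).
Proof.
  induction n as [| n IH]; [simpl; rewrite Rmult_0_l, exp_0; ring |].
  rewrite S_INR. simpl. rewrite IH, <- exp_plus. f_equal. ring.
Qed.

Lemma grid_cells_meeting m j h al be : 0 < h -> INR m * h <= al < be ->
  be <= INR (S m) * h -> INR j * h < be -> al < INR (S j) * h -> j = m.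
Proof.
  intros Hh H1 H2 Hj1 Hj2.
  assert (Hjm : INR j < INR (S m)) by (apply Rmult_lt_reg_r with h; lra).
  assert (Hmj : INR m < INR (S j)) by (apply Rmult_lt_reg_r with h; lra).
  apply INR_lt in Hjm, Hmj. lia.
Qed.

Section Scheme.

Variables (a r : R -> R) (q : R) (k : nat) (phi z : R -> R) (a0 : R).
Hypotheses (Hq : 0 < q) (Hk : (1 <= k)%nat)
  (Hr : forall u, 0 <= u -> 0 <= r u <= q)
  (Ha : forall u, 0 <= u -> Rabs (a u) <= a0)
  (Hz : is_scheme a r q k phi z).

Let h := q / INR k.

Lemma step_pos : 0 < h.
Proof. pose proof (INR_ge_1 k Hk). unfold h. apply Rdiv_lt_0_compat; lra. Qed.

Lemma step_le : h <= q.
Proof.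
  pose proof (INR_ge_1 k Hk). unfold h. apply Rmult_le_reg_r with (INR k); [lra |].
  replace (q / INR k * INR k) with q by (field; lra). nra.
Qed.

Lemma grid_delay_bounds i :
  INR i * h - r (INR i * h) <= grid_delay r h i
  /\ grid_delay r h i < INR i * h - r (INR i * h) + h
  /\ grid_delay r h i <= INR i * h.
Proof.
  pose proof step_pos as Hh.
  assert (Hi : 0 <= INR i * h) by (apply Rmult_le_pos; [apply pos_INR | lra]).
  destruct (Hr _ Hi) as [Hr1 Hr2].
  set (y := r (INR i * h) / h).
  assert (Hy : 0 <= y) by (apply Rdiv_le_0_compat; lra).
  destruct (base_Int_part y) as [B1 B2].
  assert (Hyh : y * h = r (INR i * h)) by (unfold y; field; lra).
  assert (Hz0 : 0 <= IZR (Int_part y)) by (apply IZR_le, Int_part_nonneg; auto).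
  unfold grid_delay. fold y. split; [| split].
  - assert (IZR (Int_part y) * h <= y * h) by (apply Rmult_le_compat_r; lra). nra.
  - assert ((y - 1) * h < IZR (Int_part y) * h) by (apply Rmult_lt_compat_r; lra). nra.
  - nra.
Qed.

(* Negative delayed grid points are among the initial nodes [-n h], [n <= k]. *)
Lemma scheme_at_negative_grid_delay i : grid_delay r h i < 0 ->
  - q <= grid_delay r h i /\ z (grid_delay r h i) = phi (grid_delay r h i).
Proof.
  intro Hneg. pose proof step_pos as Hh. pose proof (INR_ge_1 k Hk).
  assert (Hi : 0 <= INR i * h) by (apply Rmult_le_pos; [apply pos_INR | lra]).
  destruct (Hr _ Hi) as [Hr1 Hr2].
  set (y := r (INR i * h) / h).
  destruct (base_Int_part y) as [B1 B2].
  assert (Hkz := Int_part_nonneg y ltac:(apply Rdiv_le_0_compat; lra)).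
  assert (Hyk : y <= INR k).
  { unfold y. apply Rmult_le_reg_r with h; [lra |].
    replace (r (INR i * h) / h * h) with (r (INR i * h)) by (field; lra).
    replace (INR k * h) with q by (unfold h; field; lra). lra. }
  set (n := Z.to_nat (Int_part y)).
  assert (En : IZR (Int_part y) = INR n) by (unfold n; rewrite INR_IZR_INZ, Z2Nat.id; auto).
  assert (Eg : grid_delay r h i = - INR (n - i) * h).
  { unfold grid_delay. fold y. rewrite En, minus_INR; [ring |].
    apply INR_le. unfold grid_delay in Hneg. fold y in Hneg. rewrite En in Hneg. nra. }
  destruct Hz as [Hinit _].
  assert (Hnk : (n - i <= k)%nat) by (enough (n <= k)%nat by lia; apply INR_le; lra).
  split.
  - rewrite Eg. apply le_INR in Hnk. unfold h in *.
    replace (- q) with (- INR k * (q / INR k)) by (field; lra). nra.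
  - rewrite Eg. exact (Hinit _ Hnk).
Qed.

Lemma scheme_derivative t : 0 < t -> (forall j : nat, t <> INR j * h) ->
  exists i : nat, INR i * h < t < INR (S i) * h
    /\ derivable_pt_lim z t (- (a t * z (grid_delay r h i))).
Proof.
  intros Ht Hng. destruct Hz as [_ [_ Hd]].
  destruct (grid_cell h t step_pos ltac:(lra)) as [i [Hi1 Hi2]].
  assert (Hi : INR i * h < t)
    by (destruct Hi1 as [Hi1 | Hi1]; [auto | exfalso; apply (Hng i); auto]).
  exists i. split; [auto | apply Hd; auto].
Qed.

Lemma scheme_lipschitz al be L : 0 <= al <= be ->
  (forall i : nat, INR i * h < be -> al < INR (S i) * h ->
     a0 * Rabs (z (grid_delay r h i)) <= L) ->
  Rabs (z be - z al) <= L * (be - al).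
Proof.
  intros Hab HL. apply Rabs_sub_le_of_derive_bound_off_grid with h; [apply step_pos | auto | |].
  - intros u Hu. apply (continue_in_subset z (fun v => 0 <= v)); [intros; lra |].
    destruct Hz as [_ [Hc _]]. apply Hc. lra.
  - intros u Hu Hng. destruct (scheme_derivative u ltac:(lra) Hng) as [i [Hi Hd]].
    eexists; split; [exact Hd |]. rewrite Rabs_Ropp, Rabs_mult.
    eapply Rle_trans; [| apply (HL i); lra].
    apply Rmult_le_compat_r; [apply Rabs_pos | apply Ha; lra].
Qed.

(* The defect [z(g_i) - z(v - r v)] of the scheme: both points lie within [2h + w] of each
   other, in a window where [z] is [a0 Zw]-Lipschitz. *)
Lemma scheme_delay_defect wh v i Zw :
  (forall t1 t2, 0 <= t1 -> 0 <= t2 -> Rabs (t2 - t1) <= h -> Rabs (r t2 - r t1) <= wh) ->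
  2 * q < v -> INR i * h < v < INR (S i) * h ->
  (forall j : nat, INR j * h < v -> v - q - h < INR (S j) * h ->
     Rabs (z (grid_delay r h j)) <= Zw) ->
  Rabs (z (grid_delay r h i) - z (v - r v)) <= a0 * Zw * (2 * h + wh).
Proof.
  intros Hw Hv Hi HZ. pose proof step_pos as Hh. pose proof step_le as Hhq.
  pose proof (Rabs_le_nonneg _ _ (Ha 0 (Rle_refl 0))) as Ha0.
  destruct (grid_delay_bounds i) as [F1 [F2 F3]].
  set (g := grid_delay r h i) in *. set (p := v - r v).
  assert (Hih : 0 <= INR i * h) by (apply Rmult_le_pos; [apply pos_INR | lra]).
  rewrite S_INR in Hi.
  pose proof (Hr _ Hih). pose proof (Hr v ltac:(lra)).
  assert (Hrr : Rabs (r v - r (INR i * h)) <= wh) by (apply Hw; try lra; rewrite Rabs_right; lra).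
  apply Rabs_le_between' in Hrr.
  assert (HZ0 : 0 <= Zw).
  { eapply Rle_trans; [apply Rabs_pos | apply (HZ i); rewrite ?S_INR; lra]. }
  assert (HL : forall al be, 0 <= al <= be -> be <= v -> v - q - h < al ->
            Rabs (z be - z al) <= a0 * Zw * (be - al)).
  { intros al be H1 H2 H3. apply scheme_lipschitz; auto.
    intros j Hj1 Hj2. apply Rmult_le_compat_l; auto. apply HZ; lra. }
  assert (0 <= a0 * Zw) by nra.
  destruct (Rle_dec p g) as [Hle | Hle%Rnot_le_lt].
  - eapply Rle_trans; [apply HL; unfold p in *; lra |].
    apply Rmult_le_compat_l; unfold p in *; lra.
  - rewrite Rabs_minus_sym. eapply Rle_trans; [apply HL; unfold p in *; lra |].
    apply Rmult_le_compat_l; unfold p in *; lra.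
Qed.

Variable Phi : R.
Hypothesis HPhi : forall th, - q <= th <= 0 -> Rabs (phi th) <= Phi.

Lemma scheme_growth_on_grid i u : 0 <= u <= INR i * h ->
  Rabs (z u) <= Phi * (1 + a0 * h) ^ i.
Proof.
  pose proof step_pos as Hh.
  pose proof (Rabs_le_nonneg _ _ (Ha 0 (Rle_refl 0))) as Ha0.
  pose proof (Rabs_le_nonneg _ _ (HPhi 0 ltac:(lra))) as HP0.
  revert u; induction i as [| i IH]; intros u Hu.
  { simpl in Hu. replace u with 0 by lra. destruct Hz as [H0 _].
    specialize (H0 O (Nat.le_0_l k)). simpl in H0. rewrite Ropp_0, Rmult_0_l in H0.
    rewrite H0. simpl. rewrite Rmult_1_r. apply HPhi; lra. }
  assert (Hpow : 1 <= (1 + a0 * h) ^ i) by (apply pow_R1_Rle; nra).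
  assert (Hstep : Phi * (1 + a0 * h) ^ i * (1 + a0 * h) = Phi * (1 + a0 * h) ^ S i)
    by (simpl; ring).
  destruct (Rle_dec u (INR i * h)) as [Hu' | Hu'%Rnot_le_lt].
  { eapply Rle_trans; [apply IH; lra |]. rewrite <- Hstep.
    assert (0 <= Phi * (1 + a0 * h) ^ i * (a0 * h))
      by (apply Rmult_le_pos; [apply Rmult_le_pos |]; nra).
    nra. }
  assert (Hg : Rabs (z (grid_delay r h i)) <= Phi * (1 + a0 * h) ^ i).
  { destruct (grid_delay_bounds i) as [_ [_ F3]].
    destruct (Rlt_dec (grid_delay r h i) 0) as [Hn | Hn].
    - destruct (scheme_at_negative_grid_delay i Hn) as [Hgq ->].
      eapply Rle_trans; [apply HPhi; lra |]. nra.
    - apply IH. lra. }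
  assert (Hl : Rabs (z u - z (INR i * h)) <= a0 * Rabs (z (grid_delay r h i)) * (u - INR i * h)).
  { apply scheme_lipschitz; [split; [apply Rmult_le_pos; [apply pos_INR | lra] | lra] |].
    intros j Hj1 Hj2. rewrite (grid_cells_meeting i j h (INR i * h) u); lra. }
  assert (Hzi : Rabs (z (INR i * h)) <= Phi * (1 + a0 * h) ^ i).
  { apply IH. split; [apply Rmult_le_pos; [apply pos_INR | lra] | lra]. }
  rewrite S_INR in Hu.
  assert (a0 * Rabs (z (grid_delay r h i)) * (u - INR i * h) <= a0 * (Phi * (1 + a0 * h) ^ i) * h)
    by (pose proof (Rabs_pos (z (grid_delay r h i))); apply Rmult_le_compat; nra).
  replace (z u) with ((z u - z (INR i * h)) + z (INR i * h)) by ring.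
  eapply Rle_trans; [apply Rabs_triang |]. rewrite <- Hstep. nra.
Qed.

Lemma scheme_growth u : 0 <= u -> Rabs (z u) <= Phi * exp (a0 * (u + h)).
Proof.
  intro Hu. pose proof step_pos as Hh.
  pose proof (Rabs_le_nonneg _ _ (Ha 0 (Rle_refl 0))) as Ha0.
  pose proof (Rabs_le_nonneg _ _ (HPhi 0 ltac:(lra))) as HP0.
  destruct (grid_cell h u Hh Hu) as [i [Hi1 Hi2]].
  eapply Rle_trans; [apply (scheme_growth_on_grid (S i)); lra |].
  apply Rmult_le_compat_l; [auto |].
  eapply Rle_trans; [apply pow_incr; split; [nra | apply exp_ineq1_le] |].
  rewrite exp_pow_INR. apply exp_le. rewrite S_INR in *. nra.
Qed.

End Scheme.

(** * The modulus of continuity of the delay *)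

Section Modulus.

Variables (r : R -> R) (q : R).
Hypothesis Hr : forall u, 0 <= u -> 0 <= r u <= q.

Lemma w_mod_bound l t1 t2 : 0 <= t1 -> 0 <= t2 -> Rabs (t2 - t1) <= l ->
  Rabs (r t2 - r t1) <= w_mod r l.
Proof.
  intros H1 H2 H3. apply lub_of_ub with q; [exists t1, t2; repeat split; auto |].
  intros y [u1 [u2 [G1 [G2 [_ ->]]]]]. pose proof (Hr u1 G1). pose proof (Hr u2 G2).
  apply Rabs_le. lra.
Qed.

Lemma w_mod_nonneg l : 0 <= l -> 0 <= w_mod r l.
Proof.
  intro Hl. eapply Rle_trans; [apply Rabs_pos | apply (w_mod_bound l 0 0); try lra].
  rewrite Rminus_diag, Rabs_R0. lra.
Qed.

Hypothesis Hr_unif : forall eps, 0 < eps -> exists delta, 0 < delta /\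
  forall t1 t2, 0 <= t1 -> 0 <= t2 -> Rabs (t2 - t1) < delta -> Rabs (r t2 - r t1) < eps.

Lemma w_mod_small eps : 0 < eps -> exists d, 0 < d /\ forall l, 0 <= l < d -> w_mod r l <= eps.
Proof.
  intro He. destruct (Hr_unif eps He) as [d [Hd H]]. exists d; split; auto.
  intros l Hl. apply lub_of_least.
  - exists (Rabs (r 0 - r 0)), 0, 0. repeat split; try lra.
    rewrite Rminus_diag, Rabs_R0; lra.
  - intros y [u1 [u2 [G1 [G2 [G3 ->]]]]]. left. apply H; auto. lra.
Qed.

Lemma K1_tends_to_0 a K : 0 < q -> 0 <= K ->
  Un_cv (fun k => K1 a r K (q / INR (S k))) 0.
Proof.
  intros Hq HK eps He. set (c := a0_of a ^ 2 * K).
  assert (Hc : 0 <= c) by (unfold c; apply Rmult_le_pos; [apply pow2_ge_0 | lra]).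
  set (e := eps / (2 * (c + 1))).
  assert (He' : 0 < e) by (apply Rdiv_lt_0_compat; lra).
  destruct (w_mod_small e He') as [d [Hd Hw]].
  assert (He1 : 0 < Rmin (d / 2) (e / 2)) by (apply Rmin_pos; lra).
  destruct (INR_archimed (Rmin (d / 2) (e / 2)) q He1) as [N HN].
  exists N. intros n Hn. unfold R_dist. rewrite Rminus_0_r.
  set (h := q / INR (S n)).
  assert (HSn : INR N <= INR (S n)) by (apply le_INR; lia).
  assert (Hn0 : 0 < INR (S n)) by (apply lt_0_INR; lia).
  assert (Hh0 : 0 < h) by (apply Rdiv_lt_0_compat; lra).
  assert (Hh1 : h < Rmin (d / 2) (e / 2)).
  { apply Rmult_lt_reg_r with (INR (S n)); [lra |].
    unfold h. replace (q / INR (S n) * INR (S n)) with q by (field; lra). nra. }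
  pose proof (Rmin_l (d / 2) (e / 2)). pose proof (Rmin_r (d / 2) (e / 2)).
  assert (Hwh : w_mod r h <= e) by (apply Hw; lra).
  pose proof (w_mod_nonneg h ltac:(lra)).
  unfold K1. fold h. replace (a0_of a ^ 2 * (2 * h + w_mod r h) * K) with
    (c * (2 * h + w_mod r h)) by (unfold c; ring).
  rewrite Rabs_right by (apply Rle_ge, Rmult_le_pos; lra).
  assert (c * (2 * h + w_mod r h) <= c * (2 * e)) by (apply Rmult_le_compat_l; lra).
  assert (c * (2 * e) < eps).
  { unfold e. replace (c * (2 * (eps / (2 * (c + 1))))) with (eps * (c / (c + 1)))
      by (field; lra).
    assert (c / (c + 1) < 1) by (apply Rmult_lt_reg_r with (c + 1); [lra |];
      unfold Rdiv; rewrite Rmult_assoc, Rinv_l; lra).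
    nra. }
  lra.
Qed.

End Modulus.

(** * Choice of the step length and of the decay rate *)

Lemma exp_decay_absorbs sg et L dl d : 0 < et < sg -> 0 < d <= dl -> 0 <= L ->
  L <= (sg - et) * exp (- sg * dl) -> exp (- sg * d) + d * L <= exp (- et * d).
Proof.
  intros He Hd HL HL2.
  assert (E : exp (- et * d) = exp (- sg * d) * exp ((sg - et) * d))
    by (rewrite <- exp_plus; f_equal; ring).
  pose proof (exp_ineq1_le ((sg - et) * d)).
  assert (exp (- sg * dl) <= exp (- sg * d)) by (apply exp_le; nra).
  pose proof (exp_pos (- sg * d)).
  assert (d * L <= d * ((sg - et) * exp (- sg * d))).
  { apply Rmult_le_compat_l; [lra |]. eapply Rle_trans; [exact HL2 |].
    apply Rmult_le_compat_l; lra. }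
  rewrite E. nra.
Qed.

(* With [mu] the midpoint of [K1v] and [sg]: once [dl X], [sg dl] and [et W] are below [e0],
   the left side is at most [K1v / (1 - e0)^2] and the right side at least [mu (1 - e0)]. *)
Lemma rate_inequality_small_params sg K1v X W e0 dl et :
  0 < sg -> 0 <= K1v -> 0 < e0 <= 1 / 3 -> K1v <= (sg + K1v) / 2 * (1 - 3 * e0) ->
  0 <= dl -> 0 <= et <= (sg - K1v) / 2 -> 0 <= W ->
  dl * X <= e0 -> sg * dl <= e0 -> et * W <= e0 ->
  K1v / (1 - dl * X) * exp (et * W) <= (sg - et) * exp (- sg * dl).
Proof.
  intros Hsg HK He0 HK1v Hdl Het HW HdlX Hsdl HetW.
  set (mu := (sg + K1v) / 2) in *. set (c := 1 - e0).
  assert (Hmu : 0 < mu) by (unfold mu; lra).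
  assert (Hc : 0 < c) by (unfold c; lra).
  assert (Hcube : 1 - 3 * e0 <= c * c * c) by (unfold c; nra).
  assert (I1 : / (1 - dl * X) <= / c) by (apply Rinv_le_contravar; unfold c; lra).
  assert (I2 : exp (et * W) <= / c).
  { eapply Rle_trans; [apply exp_le_inv; nra |]. apply Rinv_le_contravar; unfold c; nra. }
  assert (I3 : c <= exp (- sg * dl)) by (pose proof (exp_ineq1_le (- sg * dl)); unfold c; nra).
  assert (I4 : K1v * / c * / c <= mu * c).
  { apply Rmult_le_reg_r with (c * c); [nra |].
    replace (K1v * / c * / c * (c * c)) with K1v by (field; lra).
    assert (mu * (1 - 3 * e0) <= mu * (c * c * c)) by (apply Rmult_le_compat_l; lra).
    nra. }
  apply Rle_trans with (mu * c); [| apply Rmult_le_compat; unfold mu in *; lra].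
  eapply Rle_trans; [| exact I4]. unfold Rdiv.
  pose proof (exp_pos (et * W)). assert (0 < / (1 - dl * X)) by (apply Rinv_0_lt_compat; lra).
  apply Rmult_le_compat; nra.
Qed.

Lemma exists_step_and_rate sg K1v X W q : 0 < sg -> 0 <= K1v < sg -> 0 <= X -> 0 <= W ->
  0 < q ->
  exists dl et, 0 < dl /\ dl <= q / 2 /\ dl * X <= 1 / 2 /\ 0 < et /\ et < sg /\
    et * dl <= 1 / 2 /\ K1v / (1 - dl * X) * exp (et * W) <= (sg - et) * exp (- sg * dl).
Proof.
  intros Hs HK HX HW Hq.
  set (e0 := (sg - K1v) / (3 * (sg + K1v))).
  assert (He0 : 0 < e0 <= 1 / 3).
  { unfold e0. split; [apply Rdiv_lt_0_compat; lra |].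
    apply Rmult_le_reg_r with (3 * (sg + K1v)); [lra |].
    unfold Rdiv. rewrite Rmult_assoc, Rinv_l by lra. lra. }
  assert (HK1v : K1v = (sg + K1v) / 2 * (1 - 3 * e0)) by (unfold e0; field; lra).
  set (dl := Rmin (q / 2) (e0 / (X + sg + 1))).
  set (et := Rmin (e0 / (W + 1)) ((sg - K1v) / 2)).
  assert (Hdl : 0 < dl) by (apply Rmin_pos; [lra | apply Rdiv_lt_0_compat; lra]).
  assert (Hdl2 : dl * (X + sg + 1) <= e0).
  { apply Rle_trans with (e0 / (X + sg + 1) * (X + sg + 1)); [| right; field; lra].
    apply Rmult_le_compat_r; [lra | apply Rmin_r]. }
  assert (Het : 0 < et) by (apply Rmin_pos; apply Rdiv_lt_0_compat; lra).
  assert (Het2 : et * (W + 1) <= e0).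
  { apply Rle_trans with (e0 / (W + 1) * (W + 1)); [| right; field; lra].
    apply Rmult_le_compat_r; [lra | apply Rmin_l]. }
  assert (Het3 : et <= (sg - K1v) / 2) by apply Rmin_r.
  exists dl, et. repeat split; try lra.
  - apply Rmin_l.
  - nra.
  - nra.
  - apply (rate_inequality_small_params sg K1v X W e0); nra.
Qed.

(** * The error estimate *)

Lemma is_sol_initial a r q s psi x v : is_sol a r q s psi x ->
  s - q <= v <= s -> x v = psi (v - s).
Proof.
  intros [Hinit _] Hv. rewrite <- (Hinit (v - s)) by lra. f_equal. ring.
Qed.

Lemma is_sol_continue_in a r q s psi x u : is_sol a r q s psi x -> s <= u ->
  continue_in x (fun v => s <= v) u.
Proof.
  intros [_ [Hc Hd]] Hu. destruct (Req_dec u s) as [-> | Hne]; [exact Hc |].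
  apply continuity_pt_continue_in, (derivable_pt_lim_continuity_pt _ _ _ (Hd u ltac:(lra))).
Qed.

Lemma is_sol_add_later a r q s s' psi psi' y d : s < s' ->
  (forall t, s < t -> derivable_pt_lim y t (- (a t * y (t - r t)))) ->
  is_sol a r q s' psi d ->
  (forall th, - q <= th <= 0 -> psi' th = y (s' + th) + psi th) ->
  is_sol a r q s' psi' (fun t => y t + d t).
Proof.
  intros Hss Hy [Hd1 [Hd2 Hd3]] Hpsi. split; [| split].
  - intros th Hth. rewrite Hpsi, Hd1 by auto. reflexivity.
  - apply limit_plus; [| exact Hd2].
    apply continuity_pt_continue_in, (derivable_pt_lim_continuity_pt _ _ _ (Hy s' Hss)).
  - intros t Ht.
    replace (- (a t * (y (t - r t) + d (t - r t)))) with
      (- (a t * y (t - r t)) + - (a t * d (t - r t))) by ring.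
    apply derivable_pt_lim_plus; [apply Hy; lra | apply Hd3; auto].
Qed.

Lemma cont_on_q_const q c : cont_on_q q (fun _ => c).
Proof. intros th _. apply continuity_pt_continue_in, continuity_pt_const. intros ? ?; auto. Qed.

(* The solution with constant history [1] equals [1] at time [s]. *)
Lemma decay_constant_ge_1 a r q K sigma : 0 < q ->
  (forall s psi, 0 < s -> cont_on_q q psi -> exists y, is_sol a r q s psi y) ->
  (forall s phi x, 0 <= s -> cont_on_q q phi -> is_sol a r q s phi x ->
     forall t, s <= t -> Rabs (x t) <= K * normq q phi * exp (- sigma * (t - s))) ->
  0 <= K -> 1 <= K.
Proof.
  intros Hq Hexist HU HK.
  destruct (Hexist 1 (fun _ => 1) ltac:(lra) (cont_on_q_const q 1)) as [y Hy].
  pose proof (HU 1 _ y ltac:(lra) (cont_on_q_const q 1) Hy 1 ltac:(lra)) as H.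
  rewrite (is_sol_initial _ _ _ _ _ _ 1 Hy) in H by lra.
  rewrite Rabs_R1, Rminus_diag, Rmult_0_r, exp_0, Rmult_1_r in H.
  assert (normq q (fun _ => 1) <= 1).
  { apply sup_on_le; [lra |]. intros. rewrite Rabs_R1; lra. }
  nra.
Qed.

Section Error_estimate.

Variables (q K sigma a0 t0 : R) (a r : R -> R).
Hypotheses (Hq : 0 < q) (HK : 1 <= K) (Hsigma : 0 < sigma) (Ht0 : 3 * q <= t0)
  (Hr : forall t, 0 <= t -> 0 <= r t <= q)
  (Ha : forall t, 0 <= t -> Rabs (a t) <= a0)
  (Hexist : forall s psi, 0 < s -> cont_on_q q psi -> exists y, is_sol a r q s psi y)
  (HU : forall s phi x, 0 <= s -> cont_on_q q phi -> is_sol a r q s phi x ->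
     forall t, s <= t -> Rabs (x t) <= K * normq q phi * exp (- sigma * (t - s))).

(* Every delayed grid point needed on one step lies within [window] before it;
   [Phi start_growth] bounds [z] on [[0, t0]], and [history_const Phi e^(-sigma s)] bounds
   both [x] and that part of [z] on [[s - window, s]].  [error_const] is the [M1] of the
   statement. *)
Definition window := 5 * q.
Definition start_growth := exp (a0 * (t0 + q)).
Definition history_const := (K + start_growth * exp (sigma * t0)) * exp (sigma * window).
Definition error_const := 4 * history_const * exp (- sigma * t0) + 1.

Lemma a0_nonneg : 0 <= a0.
Proof. exact (Rabs_le_nonneg _ _ (Ha 0 (Rle_refl 0))). Qed.

Lemma start_growth_ge_1 : 1 <= start_growth.
Proof.
  pose proof a0_nonneg. unfold start_growth. rewrite <- exp_0. apply exp_le. nra.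
Qed.

Lemma history_const_nonneg : 0 <= history_const.
Proof.
  pose proof start_growth_ge_1. pose proof (exp_pos (sigma * t0)).
  pose proof (exp_pos (sigma * window)). unfold history_const. apply Rmult_le_pos; nra.
Qed.

Lemma error_const_pos : 0 < error_const.
Proof.
  pose proof history_const_nonneg. pose proof (exp_pos (- sigma * t0)).
  unfold error_const. nra.
Qed.

Lemma start_growth_le_history Phi s : 0 <= Phi -> s < t0 + window ->
  Phi * start_growth <= history_const * Phi * exp (- sigma * s).
Proof.
  intros HP Hs. pose proof start_growth_ge_1.
  assert (start_growth
          <= start_growth * exp (sigma * t0) * exp (sigma * window) * exp (- sigma * s)).
  { rewrite !Rmult_assoc, <- !exp_plus. rewrite <- (Rmult_1_r start_growth) at 1.
    apply Rmult_le_compat_l; [lra |]. rewrite <- exp_0. apply exp_le. nra. }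
  assert (0 <= K * exp (sigma * window) * exp (- sigma * s)).
  { pose proof (exp_pos (sigma * window)). pose proof (exp_pos (- sigma * s)).
    apply Rmult_le_pos; nra. }
  unfold history_const. nra.
Qed.

Lemma decay_le_history Phi g s : 0 <= Phi -> s - window <= g ->
  K * Phi * exp (- sigma * g) <= history_const * Phi * exp (- sigma * s).
Proof.
  intros HP Hg. pose proof start_growth_ge_1.
  assert (exp (- sigma * g) <= exp (sigma * window) * exp (- sigma * s))
    by (rewrite <- exp_plus; apply exp_le; nra).
  pose proof (exp_pos (sigma * t0)). pose proof (exp_pos (sigma * window)).
  pose proof (exp_pos (- sigma * s)).
  assert (0 <= start_growth * exp (sigma * t0) * exp (sigma * window) * Phi * exp (- sigma * s))
    by (repeat apply Rmult_le_pos; lra).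
  assert (K * Phi * exp (- sigma * g) <= K * Phi * (exp (sigma * window) * exp (- sigma * s)))
    by (apply Rmult_le_compat_l; nra).
  unfold history_const. nra.
Qed.

Variable k : nat.
Hypothesis Hk : (1 <= k)%nat.
Let h := q / INR k.
Variable wh : R.
Hypothesis Hwh : forall t1 t2, 0 <= t1 -> 0 <= t2 -> Rabs (t2 - t1) <= h ->
  Rabs (r t2 - r t1) <= wh.

Lemma h_pos : 0 < h.
Proof. exact (step_pos q k Hq Hk). Qed.

Lemma h_le_q : h <= q.
Proof. exact (step_le q k Hq Hk). Qed.

(* [defect_const] bounds the forcing of the error equation per unit size of [z] (see
   [scheme_delay_defect]); [rate_loss] is the [K1(h)] of the statement. *)
Definition defect_const := a0 ^ 2 * (2 * h + wh).
Definition rate_loss := defect_const * K.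
Definition step_growth := a0 + defect_const.

Lemma wh_nonneg : 0 <= wh.
Proof.
  apply (Rabs_le_nonneg (r 0 - r 0)), (Hwh 0 0); try lra.
  rewrite Rminus_diag, Rabs_R0. left; apply h_pos.
Qed.

Lemma defect_const_nonneg : 0 <= defect_const.
Proof.
  pose proof h_pos. pose proof wh_nonneg.
  unfold defect_const. apply Rmult_le_pos; [apply pow2_ge_0 | lra].
Qed.

Lemma defect_const_le_rate_loss : defect_const <= rate_loss.
Proof. pose proof defect_const_nonneg. unfold rate_loss. nra. Qed.

Lemma rate_loss_nonneg : 0 <= rate_loss.
Proof. pose proof defect_const_nonneg. pose proof defect_const_le_rate_loss. lra. Qed.

Lemma step_growth_nonneg : 0 <= step_growth.
Proof. pose proof a0_nonneg. pose proof defect_const_nonneg. unfold step_growth. lra. Qed.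

Variables dl et : R.
Hypotheses (Hdl : 0 < dl) (Hdlq : dl <= q / 2) (HdlX : dl * step_growth <= 1 / 2)
  (Het : 0 < et) (Hets : et < sigma) (Hetdl : et * dl <= 1 / 2)
  (Hrate : rate_loss / (1 - dl * step_growth) * exp (et * window)
             <= (sigma - et) * exp (- sigma * dl)).

Definition inflated_rate := rate_loss / (1 - dl * step_growth).

Lemma inflated_rate_bounds : 0 <= inflated_rate <= 2 * rate_loss.
Proof.
  pose proof defect_const_le_rate_loss. pose proof defect_const_nonneg.
  unfold inflated_rate. split; [apply Rdiv_le_0_compat; lra |].
  apply Rmult_le_reg_r with (1 - dl * step_growth); [lra |].
  unfold Rdiv. rewrite Rmult_assoc, Rinv_l by lra. nra.
Qed.

Variables (phi x z : R -> R).
Hypotheses (Hphi : cont_on_q q phi) (Hx : is_sol a r q 0 phi x)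
  (Hz : is_scheme a r q k phi z).

Let Phi := normq q phi.
Let E u := x u - z u.
Let N0 := sup_on E (t0 - q) t0.

Lemma phi_le_Phi th : - q <= th <= 0 -> Rabs (phi th) <= Phi.
Proof. intro Hth. apply Rabs_le_sup_on; auto. Qed.

Lemma Phi_nonneg : 0 <= Phi.
Proof. exact (Rabs_le_nonneg _ _ (phi_le_Phi 0 ltac:(lra))). Qed.

Lemma error_continuity_pt u : 0 < u -> continuity_pt E u.
Proof.
  intro Hu. apply (continuity_pt_minus x z).
  - destruct Hx as [_ [_ Hd]]. eapply derivable_pt_lim_continuity_pt; apply Hd; auto.
  - apply continue_in_interior_continuity_pt with 0; auto.
    destruct Hz as [_ [Hc _]]. apply Hc. lra.
Qed.

Lemma error_le_N0 u : t0 - q <= u <= t0 -> Rabs (E u) <= N0.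
Proof.
  intro Hu. apply Rabs_le_sup_on; auto.
  intros v Hv. apply continuity_pt_continue_in, error_continuity_pt. lra.
Qed.

Lemma N0_nonneg : 0 <= N0.
Proof. exact (Rabs_le_nonneg _ _ (error_le_N0 t0 ltac:(lra))). Qed.

Lemma solution_decay u : 0 <= u -> Rabs (x u) <= K * Phi * exp (- sigma * u).
Proof.
  intro Hu. pose proof (HU 0 phi x ltac:(lra) Hphi Hx u Hu) as H. rewrite Rminus_0_r in H. auto.
Qed.

Lemma scheme_start_bound u : 0 <= u <= t0 -> Rabs (z u) <= Phi * start_growth.
Proof.
  intro Hu. pose proof a0_nonneg. pose proof Phi_nonneg. pose proof (step_le q k Hq Hk).
  eapply Rle_trans; [apply (scheme_growth a r q k phi z a0 Hq Hk Hr Ha Hz Phi phi_le_Phi u); lra |].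
  apply Rmult_le_compat_l; auto. unfold start_growth. apply exp_le. nra.
Qed.

Definition error_bound u :=
  (K * N0 + rate_loss * error_const * Phi * u) * exp (- et * (u - t0)).

Definition history_bound s :=
  history_const * Phi * exp (- sigma * s) + exp (et * window) * error_bound s.

Lemma error_slope_nonneg : 0 <= rate_loss * error_const * Phi.
Proof.
  pose proof rate_loss_nonneg. pose proof error_const_pos. pose proof Phi_nonneg.
  apply Rmult_le_pos; [apply Rmult_le_pos |]; lra.
Qed.

Lemma error_bound_coeff_nonneg u : 0 <= u -> 0 <= K * N0 + rate_loss * error_const * Phi * u.
Proof.
  intro Hu. pose proof error_slope_nonneg. pose proof N0_nonneg.
  assert (0 <= rate_loss * error_const * Phi * u) by (apply Rmult_le_pos; lra).
  nra.
Qed.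

Lemma error_bound_nonneg u : 0 <= u -> 0 <= error_bound u.
Proof.
  intro Hu. unfold error_bound. apply Rmult_le_pos; [apply error_bound_coeff_nonneg; auto |].
  left; apply exp_pos.
Qed.

Lemma history_bound_nonneg s : 0 <= s -> 0 <= history_bound s.
Proof.
  intro Hs. pose proof history_const_nonneg. pose proof Phi_nonneg.
  pose proof (exp_pos (- sigma * s)). pose proof (exp_pos (et * window)).
  pose proof (error_bound_nonneg s Hs). unfold history_bound.
  assert (0 <= history_const * Phi * exp (- sigma * s))
    by (apply Rmult_le_pos; [apply Rmult_le_pos |]; lra).
  nra.
Qed.

Lemma error_bound_window g s : t0 <= g <= s -> s - g <= window ->
  error_bound g <= exp (et * window) * error_bound s.
Proof.
  intros Hg Hw. unfold error_bound. pose proof error_slope_nonneg as Hc.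
  assert (exp (- et * (g - t0)) <= exp (et * window) * exp (- et * (s - t0)))
    by (rewrite <- exp_plus; apply exp_le; nra).
  pose proof (error_bound_coeff_nonneg g ltac:(lra)).
  pose proof (exp_pos (- et * (g - t0))). pose proof (exp_pos (- et * (s - t0))).
  apply Rle_trans with ((K * N0 + rate_loss * error_const * Phi * s) * exp (- et * (g - t0))).
  - apply Rmult_le_compat_r; [lra |]. apply Rplus_le_compat_l, Rmult_le_compat_l; lra.
  - set (c := K * N0 + rate_loss * error_const * Phi * s).
    replace (exp (et * window) * (c * exp (- et * (s - t0))))
      with (c * (exp (et * window) * exp (- et * (s - t0)))) by ring.
    apply Rmult_le_compat_l; [apply error_bound_coeff_nonneg |]; lra.
Qed.

(* The history term is paid for by the linear growth of [error_bound], thanks to the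
   factor [4 history_const exp(-sigma t0)] in [error_const]. *)
Lemma history_term_absorbed s d : t0 <= s -> 0 < d <= dl ->
  d * inflated_rate * (history_const * Phi * exp (- sigma * s))
  <= rate_loss * error_const * Phi * d * (exp (- et * (s - t0)) * exp (- et * d)).
Proof.
  intros Hs Hd. pose proof inflated_rate_bounds. pose proof defect_const_le_rate_loss.
  pose proof defect_const_nonneg. pose proof history_const_nonneg. pose proof Phi_nonneg.
  set (e0 := exp (- et * (s - t0))). assert (He0 : 0 < e0) by apply exp_pos.
  pose proof (exp_pos (- sigma * t0)). pose proof (exp_pos (- sigma * s)).
  assert (Hs0 : exp (- sigma * s) <= exp (- sigma * t0) * e0)
    by (unfold e0; rewrite <- exp_plus; apply exp_le; nra).
  assert (Hed : 1 / 2 <= exp (- et * d)).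
  { pose proof (exp_ineq1_le (- et * d)).
    assert (et * d <= et * dl) by (apply Rmult_le_compat_l; lra). lra. }
  assert (HM : 4 * history_const * exp (- sigma * t0) <= error_const)
    by (unfold error_const; lra).
  assert (Hprod : 0 <= rate_loss * Phi * d * e0)
    by (apply Rmult_le_pos; [apply Rmult_le_pos; [apply Rmult_le_pos |] |]; lra).
  apply Rle_trans with ((rate_loss * Phi * d * e0) * (2 * history_const * exp (- sigma * t0))).
  - replace ((rate_loss * Phi * d * e0) * (2 * history_const * exp (- sigma * t0))) with
      (d * (2 * rate_loss) * (history_const * Phi * (exp (- sigma * t0) * e0))) by ring.
    apply Rmult_le_compat; [nra | apply Rmult_le_pos; [apply Rmult_le_pos |]; lra | nra |].
    apply Rmult_le_compat_l; [apply Rmult_le_pos |]; lra.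
  - replace (rate_loss * error_const * Phi * d * (e0 * exp (- et * d))) with
      ((rate_loss * Phi * d * e0) * (error_const * exp (- et * d))) by ring.
    apply Rmult_le_compat_l; [lra |].
    assert (error_const * (1 / 2) <= error_const * exp (- et * d))
      by (apply Rmult_le_compat_l; [pose proof error_const_pos |]; lra).
    lra.
Qed.

Lemma error_bound_step s d : t0 <= s -> 0 < d <= dl ->
  exp (- sigma * d) * error_bound s + d * inflated_rate * history_bound s
  <= error_bound (s + d).
Proof.
  intros Hs Hd. pose proof inflated_rate_bounds.
  set (c := K * N0 + rate_loss * error_const * Phi * s).
  set (e0 := exp (- et * (s - t0))).
  assert (Hc : 0 <= c) by (apply error_bound_coeff_nonneg; lra).
  pose proof (exp_pos (et * window)).
  assert (He0 : 0 < e0) by apply exp_pos.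
  assert (Habs : exp (- sigma * d) + d * (inflated_rate * exp (et * window)) <= exp (- et * d)).
  { apply (exp_decay_absorbs sigma et _ dl); try lra. apply Rmult_le_pos; lra. exact Hrate. }
  pose proof (history_term_absorbed s d Hs Hd) as Hhist. fold e0 in Hhist.
  assert (Eb : error_bound (s + d)
               = exp (- et * d) * (c * e0)
                 + rate_loss * error_const * Phi * d * (e0 * exp (- et * d))).
  { unfold error_bound, c, e0.
    replace (- et * (s + d - t0)) with (- et * (s - t0) + - et * d) by ring.
    rewrite exp_plus. ring. }
  assert (Es : error_bound s = c * e0) by reflexivity.
  unfold history_bound. rewrite Eb, Es.
  assert ((exp (- sigma * d) + d * (inflated_rate * exp (et * window))) * (c * e0)
          <= exp (- et * d) * (c * e0)) by (apply Rmult_le_compat_r; nra).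
  replace (exp (- sigma * d) * (c * e0) + d * inflated_rate *
             (history_const * Phi * exp (- sigma * s) + exp (et * window) * (c * e0)))
    with ((exp (- sigma * d) + d * (inflated_rate * exp (et * window))) * (c * e0)
          + d * inflated_rate * (history_const * Phi * exp (- sigma * s))) by ring.
  lra.
Qed.

Section Step.

Variables (s : R) (y : R -> R) (V : R).
Hypotheses (Hs : t0 <= s)
  (HE : forall u, t0 <= u <= s -> Rabs (E u) <= error_bound u)
  (Hy : is_sol a r q s (fun th => E (s + th)) y)
  (HV : V <= error_bound s)
  (Hyb : forall t, s <= t -> Rabs (y t) <= exp (- sigma * (t - s)) * V).

Let s' := s + dl.
Let w u := E u - y u.

Lemma correction_zero v : s - q <= v <= s -> w v = 0.
Proof.
  intro Hv. unfold w. rewrite (is_sol_initial _ _ _ _ _ _ v Hy Hv).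
  replace (s + (v - s)) with v by ring. ring.
Qed.

Lemma correction_continue_in u : s <= u <= s' -> continue_in w (fun v => s <= v <= s') u.
Proof.
  intro Hu. apply limit_minus.
  - apply continuity_pt_continue_in, error_continuity_pt. lra.
  - apply (continue_in_subset y (fun v => s <= v)); [intros; lra |].
    apply (is_sol_continue_in _ _ _ _ _ _ _ Hy). lra.
Qed.

Lemma V_nonneg : 0 <= V.
Proof.
  pose proof (Hyb s (Rle_refl s)) as H. rewrite Rminus_diag, Rmult_0_r, exp_0, Rmult_1_l in H.
  exact (Rabs_le_nonneg _ _ H).
Qed.

Section Correction.

Variable m : R.
Hypothesis Hm : forall v, s - q <= v <= s' -> Rabs (w v) <= m.

Lemma delayed_scheme_bound v j : s < v <= s' -> INR j * h < v ->
  v - q - h < INR (S j) * h -> Rabs (z (grid_delay r h j)) <= history_bound s + m.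
Proof.
  intros Hv Hj1 Hj2. pose proof h_pos. pose proof h_le_q.
  pose proof Phi_nonneg. pose proof start_growth_ge_1. pose proof history_const_nonneg.
  pose proof (exp_pos (- sigma * s)). pose proof (exp_pos (et * window)).
  pose proof (error_bound_nonneg s ltac:(lra)).
  assert (HeW : 1 <= exp (et * window)) by (rewrite <- exp_0; apply exp_le; unfold window; nra).
  assert (Hhist : 0 <= history_const * Phi * exp (- sigma * s))
    by (apply Rmult_le_pos; [apply Rmult_le_pos |]; lra).
  destruct (grid_delay_bounds r q k Hq Hk Hr j) as [F1 [F2 F3]]. fold h in F1, F2, F3.
  assert (Hjh : 0 <= INR j * h) by (apply Rmult_le_pos; [apply pos_INR | lra]).
  pose proof (Hr _ Hjh). rewrite S_INR, Rmult_plus_distr_r, Rmult_1_l in Hj2.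
  set (g := grid_delay r h j) in *.
  assert (Hgw : s - window < g) by (unfold window; lra).
  pose proof (Rabs_le_nonneg _ _ (Hm s ltac:(unfold s'; lra))) as Hm0.
  unfold history_bound.
  destruct (Rlt_dec g 0) as [Hg0 | Hg0%Rnot_lt_le].
  { destruct (scheme_at_negative_grid_delay a r q k phi z Hq Hk Hr Hz j) as [Hgq Hzg];
      [exact Hg0 |]. fold h g in Hgq, Hzg. rewrite Hzg.
    eapply Rle_trans; [apply phi_le_Phi; lra |].
    pose proof (start_growth_le_history Phi s ltac:(lra) ltac:(unfold window; lra)). nra. }
  destruct (Rlt_dec g t0) as [Hgt | Hgt%Rnot_lt_le].
  { eapply Rle_trans; [apply scheme_start_bound; lra |].
    pose proof (start_growth_le_history Phi s ltac:(lra) ltac:(lra)). nra. }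
  pose proof (solution_decay g ltac:(lra)).
  pose proof (decay_le_history Phi g s ltac:(lra) ltac:(lra)).
  destruct (Rle_dec g s) as [Hgs | Hgs%Rnot_le_lt].
  - replace (z g) with (x g - E g) by (unfold E; ring).
    eapply Rle_trans; [apply Rabs_triang |]. rewrite Rabs_Ropp.
    pose proof (HE g ltac:(lra)). pose proof (error_bound_window g s ltac:(lra) ltac:(lra)). lra.
  - replace (z g) with (x g - y g - w g) by (unfold w, E; ring).
    unfold Rminus at 1. eapply Rle_trans; [apply Rabs_triang |]. rewrite Rabs_Ropp.
    eapply Rle_trans; [apply Rplus_le_compat_r, Rabs_triang |]. rewrite Rabs_Ropp.
    pose proof (Hyb g ltac:(lra)). pose proof (Hm g ltac:(unfold s' in *; lra)).
    pose proof V_nonneg.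
    assert (exp (- sigma * (g - s)) * V <= V).
    { rewrite <- (Rmult_1_l V) at 2. apply Rmult_le_compat_r; auto.
      rewrite <- exp_0. apply exp_le. nra. }
    nra.
Qed.

(* [w] solves the equation with the forcing [a(t) (z(g_i) - z(t - r t))], bounded
   by [scheme_delay_defect]. *)
Lemma correction_derivative_bound u : s < u < s' -> (forall j : nat, u <> INR j * h) ->
  exists d, derivable_pt_lim w u d /\
    Rabs d <= a0 * m + defect_const * (history_bound s + m).
Proof.
  intros Hu Hng. pose proof a0_nonneg. pose proof h_pos.
  destruct (scheme_derivative a r q k phi z Hq Hk Hz u ltac:(lra) Hng) as [i [Hi Hzd]].
  fold h in Hi, Hzd.
  exists (- (a u * w (u - r u)) + a u * (z (grid_delay r h i) - z (u - r u))). split.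
  - destruct Hx as [_ [_ Hxd]]. destruct Hy as [_ [_ Hyd]].
    assert (D := derivable_pt_lim_minus _ _ _ _ _
                   (derivable_pt_lim_minus _ _ _ _ _ (Hxd u ltac:(lra)) Hzd) (Hyd u ltac:(lra))).
    unfold w, E. replace (- (a u * (x (u - r u) - z (u - r u) - y (u - r u)))
                          + a u * (z (grid_delay r h i) - z (u - r u)))
      with (- (a u * x (u - r u)) - - (a u * z (grid_delay r h i)) - - (a u * y (u - r u)))
      by ring.
    exact D.
  - pose proof (Hr u ltac:(lra)).
    assert (Hdef : Rabs (z (grid_delay r h i) - z (u - r u))
                   <= a0 * (history_bound s + m) * (2 * h + wh)).
    { apply (scheme_delay_defect a r q k phi z a0 Hq Hk Hr Ha Hz); auto; [lra |].
      intros j Hj1 Hj2. apply (delayed_scheme_bound u j); auto; lra. }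
    assert (Hwd : Rabs (w (u - r u)) <= m) by (apply Hm; lra).
    pose proof (Ha u ltac:(lra)).
    eapply Rle_trans; [apply Rabs_triang |]. rewrite Rabs_Ropp, !Rabs_mult.
    assert (Rabs (a u) * Rabs (w (u - r u)) <= a0 * m)
      by (apply Rmult_le_compat; auto; apply Rabs_pos).
    assert (Rabs (a u) * Rabs (z (grid_delay r h i) - z (u - r u))
            <= a0 * (a0 * (history_bound s + m) * (2 * h + wh)))
      by (apply Rmult_le_compat; auto; apply Rabs_pos).
    unfold defect_const. fold h. nra.
Qed.

Lemma correction_linear_growth u : s <= u <= s' ->
  Rabs (w u) <= (a0 * m + defect_const * (history_bound s + m)) * (u - s).
Proof.
  intro Hu. replace (w u) with (w u - w s) by (rewrite (correction_zero s); [ring | lra]).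
  apply Rabs_sub_le_of_derive_bound_off_grid with h; [apply h_pos | lra | |].
  - intros v Hv. apply (continue_in_subset w (fun v => s <= v <= s')); [intros; lra |].
    apply correction_continue_in. lra.
  - intros v Hv Hng. apply correction_derivative_bound; auto. lra.
Qed.

End Correction.

(* With [m] the maximum of [|w|] on [[s, s']], [correction_linear_growth] gives
   [m <= dl (step_growth m + defect_const (history_bound s))], which closes up because
   [dl step_growth <= 1/2]. *)
Lemma correction_bound : exists m, 0 <= m /\
  (forall v, s - q <= v <= s' -> Rabs (w v) <= m) /\
  K * m <= dl * inflated_rate * history_bound s /\
  (forall u, s <= u <= s' -> Rabs (w u) <= (u - s) * inflated_rate * history_bound s).
Proof.
  destruct (continue_in_attains_max_abs w s s' ltac:(unfold s'; lra) correction_continue_in)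
    as [us [Hus Hmax]].
  set (m := Rabs (w us)). assert (Hm0 : 0 <= m) by apply Rabs_pos.
  assert (Hwm : forall v, s - q <= v <= s' -> Rabs (w v) <= m).
  { intros v Hv. destruct (Rle_dec v s) as [Hvs | Hvs%Rnot_le_lt].
    - rewrite correction_zero, Rabs_R0 by lra. lra.
    - apply Hmax. lra. }
  pose proof defect_const_nonneg. pose proof defect_const_le_rate_loss. pose proof a0_nonneg.
  pose proof (history_bound_nonneg s ltac:(lra)) as HZ0.
  set (Z0 := history_bound s) in *.
  assert (Hc : 0 < 1 - dl * step_growth) by lra.
  assert (Hmb : m * (1 - dl * step_growth) <= dl * defect_const * Z0).
  { pose proof (correction_linear_growth m Hwm us Hus) as Hgrowth. fold m Z0 in Hgrowth.
    assert ((a0 * m + defect_const * (Z0 + m)) * (us - s)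
            <= (a0 * m + defect_const * (Z0 + m)) * dl).
    { apply Rmult_le_compat_l; [| unfold s' in *; lra].
      assert (0 <= defect_const * (Z0 + m)) by (apply Rmult_le_pos; lra). nra. }
    unfold step_growth. nra. }
  assert (Hslope : a0 * m + defect_const * (Z0 + m) <= inflated_rate * Z0).
  { unfold inflated_rate. apply Rmult_le_reg_r with (1 - dl * step_growth); [lra |].
    replace (rate_loss / (1 - dl * step_growth) * Z0 * (1 - dl * step_growth))
      with (rate_loss * Z0) by (field; lra).
    assert (defect_const * Z0 <= rate_loss * Z0) by (apply Rmult_le_compat_r; lra).
    unfold step_growth in *. nra. }
  exists m. repeat split; auto.
  - unfold inflated_rate. apply Rmult_le_reg_r with (1 - dl * step_growth); [lra |].
    replace (dl * (rate_loss / (1 - dl * step_growth)) * Z0 * (1 - dl * step_growth))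
      with (dl * rate_loss * Z0) by (field; lra).
    unfold rate_loss. nra.
  - intros u Hu. eapply Rle_trans; [apply (correction_linear_growth m Hwm u Hu) |].
    fold Z0. rewrite (Rmult_comm (u - s)), Rmult_assoc, (Rmult_comm (u - s)), <- Rmult_assoc.
    apply Rmult_le_compat_r; lra.
Qed.

Lemma step_error_le u : t0 <= u <= s' -> Rabs (E u) <= error_bound u.
Proof.
  intro Hu. destruct (Rle_dec u s) as [Hus | Hus%Rnot_le_lt]; [apply HE; lra |].
  destruct correction_bound as [m [_ [_ [_ Hw]]]].
  pose proof (Hw u ltac:(lra)). pose proof (Hyb u ltac:(lra)).
  pose proof (error_bound_step s (u - s) Hs ltac:(unfold s' in *; lra)) as Hstep.
  replace (s + (u - s)) with u in Hstep by ring.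
  assert (exp (- sigma * (u - s)) * V <= exp (- sigma * (u - s)) * error_bound s)
    by (apply Rmult_le_compat_l; [left; apply exp_pos | auto]).
  replace (E u) with (y u + w u) by (unfold w; ring).
  eapply Rle_trans; [apply Rabs_triang | lra].
Qed.

Lemma correction_history_continuous : cont_on_q q (fun th => w (s' + th)).
Proof.
  intros th Hth.
  apply (continue_in_subset _ (fun th => (s' - q) - s' <= th <= s' - s')); [intros; lra |].
  apply (continue_in_shift w (s' - q) s' s' th).
  apply (continue_in_extend_by_zero w (s' - q) s s'); [unfold s'; lra | | | lra].
  - intros v Hv. apply correction_zero. unfold s' in Hv. lra.
  - exact correction_continue_in.
Qed.

(* The homogeneous solution is restarted at [s'] by adding the solution carrying the
   history of [w]. *)
Lemma step_solution : exists y' V', is_sol a r q s' (fun th => E (s' + th)) y' /\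
  V' <= error_bound s' /\ forall t, s' <= t -> Rabs (y' t) <= exp (- sigma * (t - s')) * V'.
Proof.
  destruct correction_bound as [m [Hm0 [Hwm [HKm _]]]].
  destruct (Hexist s' (fun th => w (s' + th)) ltac:(unfold s'; lra)
              correction_history_continuous) as [D HD].
  assert (Hnorm : normq q (fun th => w (s' + th)) <= m).
  { apply sup_on_le; [lra |]. intros th Hth. apply Hwm. unfold s' in *. lra. }
  exists (fun t => y t + D t), (exp (- sigma * dl) * V + K * m). split; [| split].
  - destruct Hy as [_ [_ Hyd]].
    apply (is_sol_add_later a r q s s' (fun th => w (s' + th))); auto; [unfold s'; lra |].
    intros th Hth. unfold w. ring.
  - pose proof (error_bound_step s dl Hs ltac:(lra)).
    assert (exp (- sigma * dl) * V <= exp (- sigma * dl) * error_bound s)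
      by (apply Rmult_le_compat_l; [left; apply exp_pos | auto]).
    unfold s'. lra.
  - intros t Ht. eapply Rle_trans; [apply Rabs_triang |].
    pose proof (Hyb t ltac:(unfold s' in *; lra)).
    pose proof (HU s' _ D ltac:(unfold s'; lra) correction_history_continuous HD t Ht).
    assert (K * normq q (fun th => w (s' + th)) <= K * m) by (apply Rmult_le_compat_l; lra).
    assert (exp (- sigma * (t - s)) = exp (- sigma * (t - s')) * exp (- sigma * dl))
      by (rewrite <- exp_plus; f_equal; unfold s'; ring).
    pose proof (exp_pos (- sigma * (t - s'))). nra.
Qed.

End Step.

Definition controlled_up_to s :=
  (forall u, t0 <= u <= s -> Rabs (E u) <= error_bound u) /\
  exists y V, is_sol a r q s (fun th => E (s + th)) y /\ V <= error_bound s /\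
    forall t, s <= t -> Rabs (y t) <= exp (- sigma * (t - s)) * V.

Lemma controlled_up_to_t0 : controlled_up_to t0.
Proof.
  assert (Hseg : cont_on_q q (fun th => E (t0 + th))).
  { intros th Hth.
    apply (continue_in_subset _ (fun th => (t0 - q) - t0 <= th <= t0 - t0)); [intros; lra |].
    apply continue_in_shift, continuity_pt_continue_in, error_continuity_pt. lra. }
  destruct (Hexist t0 _ ltac:(lra) Hseg) as [y Hy].
  assert (Hnorm : normq q (fun th => E (t0 + th)) <= N0).
  { apply sup_on_le; [lra |]. intros th Hth. apply error_le_N0. lra. }
  assert (HKN : K * normq q (fun th => E (t0 + th)) <= error_bound t0).
  { unfold error_bound. rewrite Rminus_diag, Rmult_0_r, exp_0, Rmult_1_r.
    pose proof error_slope_nonneg.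
    assert (0 <= rate_loss * error_const * Phi * t0) by (apply Rmult_le_pos; lra).
    assert (K * normq q (fun th => E (t0 + th)) <= K * N0) by (apply Rmult_le_compat_l; lra).
    lra. }
  assert (Hyb : forall t, t0 <= t -> Rabs (y t)
            <= exp (- sigma * (t - t0)) * (K * normq q (fun th => E (t0 + th)))).
  { intros t Ht. pose proof (HU t0 _ y ltac:(lra) Hseg Hy t Ht). lra. }
  split.
  - intros u Hu. replace u with t0 by lra.
    assert (Hy0 : y t0 = E t0)
      by (rewrite (is_sol_initial _ _ _ _ _ _ t0 Hy) by lra; f_equal; ring).
    rewrite <- Hy0. eapply Rle_trans; [apply Hyb; lra |].
    rewrite Rminus_diag, Rmult_0_r, exp_0, Rmult_1_l. exact HKN.
  - exists y, (K * normq q (fun th => E (t0 + th))). auto.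
Qed.

Lemma controlled_up_to_step s : t0 <= s -> controlled_up_to s -> controlled_up_to (s + dl).
Proof.
  intros Hs [HE [y [V [Hy [HV Hyb]]]]]. split.
  - exact (step_error_le s y V Hs HE Hy HV Hyb).
  - exact (step_solution s y V Hs HE Hy HV Hyb).
Qed.

Lemma error_estimate t : t0 <= t -> Rabs (x t - z t) <= error_bound t.
Proof.
  intro Ht.
  assert (Hn : forall n : nat, controlled_up_to (t0 + INR n * dl)).
  { induction n as [| n IH]; [rewrite Rmult_0_l, Rplus_0_r; apply controlled_up_to_t0 |].
    rewrite S_INR, Rmult_plus_distr_r, Rmult_1_l, <- Rplus_assoc.
    apply controlled_up_to_step; auto. pose proof (pos_INR n). nra. }
  destruct (INR_archimed dl (t - t0) Hdl) as [n Hlt].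
  apply (proj1 (Hn n)). lra.
Qed.


End Error_estimate.

Theorem theorem4p1 (q : R) (a r : R -> R) (K sigma : R)
  (Hq : 0 < q)
  (Ha_cont : forall t, 0 <= t -> continue_in a (fun u => 0 <= u) t)
  (Ha_nonneg : forall t, 0 <= t -> 0 <= a t)
  (Hr_range : forall t, 0 <= t -> 0 <= r t <= q)
  (Hq_sup : is_lub (fun y => exists t, 0 <= t /\ y = r t) q)
  (A1 : UAS a r q)
  (A2 : exists M, forall t, 0 <= t -> Rabs (a t) <= M)
  (A3 : forall eps, 0 < eps -> exists delta, 0 < delta /\
          forall t1 t2, 0 <= t1 -> 0 <= t2 -> Rabs (t2 - t1) < delta ->
            Rabs (r t2 - r t1) < eps)
  (HK : 0 < K) (Hsigma : 0 < sigma)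
  (HU : forall s phi x, 0 <= s -> cont_on_q q phi -> is_sol a r q s phi x ->
          forall t, s <= t -> Rabs (x t) <= K * normq q phi * exp (- sigma * (t - s))) :
  let t0 := 3 * q + w_mod r q in
  Un_cv (fun k => K1 a r K (q / INR (S k))) 0 /\
  exists M1, 0 < M1 /\
    forall k : nat, (1 <= k)%nat ->
      let h := q / INR k in
      K1 a r K h < sigma ->
      exists eta, 0 < eta /\
        forall phi x z, cont_on_q q phi -> is_sol a r q 0 phi x ->
          is_scheme a r q k phi z ->
          forall t, t0 <= t ->
            Rabs (x t - z t) <=
              (K * sup_on (fun s => x s - z s) (t0 - q) t0
               + K1 a r K h * M1 * normq q phi * t) * exp (- eta * (t - t0)).
Proof.
  intros t0. split; [apply K1_tends_to_0; auto; lra |].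
  set (a0 := a0_of a). pose proof (Rabs_le_a0_of a A2) as Ha0. fold a0 in Ha0.
  assert (Hexist : forall s psi, 0 < s -> cont_on_q q psi -> exists y, is_sol a r q s psi y).
  { intros s psi Hs Hpsi.
    apply (linear_dde_solution_exists a r q a0 s psi); auto; [apply (a0_nonneg a0 a Ha0) | |].
    - intros u Hu. apply continue_in_interior_continuity_pt with 0; auto. apply Ha_cont. lra.
    - intros u Hu. apply continuity_pt_of_uniform_continuity; auto. }
  assert (HK1 : 1 <= K) by (apply (decay_constant_ge_1 a r q K sigma); auto; lra).
  assert (Ht0 : 3 * q <= t0) by (pose proof (w_mod_nonneg r q Hr_range q); unfold t0; lra).
  exists (error_const q K sigma a0 t0). split; [apply (error_const_pos _ _ _ _ _ a); auto |].
  intros k Hk h HK1s. pose proof (w_mod_bound r q Hr_range h) as Hwh.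
  destruct (exists_step_and_rate sigma (K1 a r K h) (step_growth q a0 k (w_mod r h))
              (window q) q Hsigma) as [dl [et [Hdl [Hdlq [HdlX [Het [Hets [Hetdl Hrate]]]]]]]].
  - split; [exact (rate_loss_nonneg q K a0 r Hq HK1 k Hk _ Hwh) | exact HK1s].
  - exact (step_growth_nonneg q a0 a r Hq Ha0 k Hk _ Hwh).
  - unfold window. lra.
  - exact Hq.
  - exists et. split; auto.
    intros phi x z Hphi Hx Hz t Ht.
    exact (error_estimate q K sigma a0 t0 a r Hq HK1 Hsigma Ht0 Hr_range Ha0 Hexist HU k Hk _
             Hwh dl et Hdl Hdlq HdlX Het Hets Hetdl Hrate phi x z Hphi Hx Hz t Ht).
Qed.
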